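(* $\overline{\mathcal{P}}$ is polynomially convex, i.e. for every $x\in\mathbb{C}^3\setminus\overline{\mathcal{P}}$ there is a polynomial $f$ in three variables with $|f|\le1$ on $\overline{\mathcal{P}}$ and $|f(x)|>1$. Moreover $\mathcal{P}$ is polynomially convex in the sense that for every compact $K\subset\mathcal{P}$ the polynomial hull $\widehat K=\{x\in\mathbb{C}^3: |f(x)|\le\sup_K|f| \text{ for all polynomials } f\}$ is contained in $\mathcal{P}$.
   Context: $\mathbb{B}$ is the open unit ball of $\mathbb{C}^{2\times 2}$ (operator norm), $\pi(A)=(a_{21},\operatorname{tr}A,\det A)$, $\mathcal{P}=\pi(\mathbb{B})$, $\overline{\mathcal{P}}$ its closure. *)

From Stdlib Require Import Reals List.
Open Scope R_scope.

Definition C : Type := (R * R)%type.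
Definition Cre (z : C) : R := fst z.
Definition Cim (z : C) : R := snd z.
Definition C0 : C := (0, 0).
Definition C1 : C := (1, 0).
Definition Cadd (z w : C) : C := (Cre z + Cre w, Cim z + Cim w).
Definition Csub (z w : C) : C := (Cre z - Cre w, Cim z - Cim w).
Definition Cmul (z w : C) : C :=
  (Cre z * Cre w - Cim z * Cim w, Cre z * Cim w + Cim z * Cre w).
Fixpoint Cpow (z : C) (n : nat) : C :=
  match n with O => C1 | S m => Cmul z (Cpow z m) end.
Definition Cnorm2 (z : C) : R := Cre z * Cre z + Cim z * Cim z.
Definition Cmod (z : C) : R := sqrt (Cnorm2 z).

Definition C3 : Type := (C * C * C)%type.
Definition dist3 (x y : C3) : R :=
  let '(x1, x2, x3) := x in let '(y1, y2, y3) := y in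
  sqrt (Cnorm2 (Csub x1 y1) + Cnorm2 (Csub x2 y2) + Cnorm2 (Csub x3 y3)).

(* Polynomials in three complex variables: finite lists of monomial terms
   c * z1^i * z2^j * z3^k. *)
Definition poly3 : Type := list (C * (nat * nat * nat)).
Definition eval_poly3 (f : poly3) (x : C3) : C :=
  let '(z1, z2, z3) := x in
  fold_right (fun t acc =>
    let '(c, (i, j, k)) := t in
    Cadd (Cmul c (Cmul (Cpow z1 i) (Cmul (Cpow z2 j) (Cpow z3 k)))) acc)
    C0 f.

Record mat2 : Type := Mat2 { a11 : C; a12 : C; a21 : C; a22 : C }.

(* Operator norm (w.r.t. Euclidean norm on C^2) strictly less than 1:
   sup_{v <> 0} |Av| / |v| < 1, i.e. there is r < 1 with |Av| <= r |v|. *)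
Definition in_unit_ball (A : mat2) : Prop :=
  exists r : R, 0 <= r /\ r < 1 /\
    forall v1 v2 : C,
      Cnorm2 (Cadd (Cmul (a11 A) v1) (Cmul (a12 A) v2))
      + Cnorm2 (Cadd (Cmul (a21 A) v1) (Cmul (a22 A) v2))
      <= (r * r) * (Cnorm2 v1 + Cnorm2 v2).

Definition piA (A : mat2) : C3 :=
  (a21 A, Cadd (a11 A) (a22 A), Csub (Cmul (a11 A) (a22 A)) (Cmul (a12 A) (a21 A))).

Definition Pdom (x : C3) : Prop := exists A : mat2, in_unit_ball A /\ piA A = x.
Definition closure3 (S : C3 -> Prop) (x : C3) : Prop :=
  forall eps : R, 0 < eps -> exists y : C3, S y /\ dist3 x y < eps.
Definition Pbar (x : C3) : Prop := closure3 Pdom x.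

(* Compact subsets of C^3 (Heine-Borel: closed and bounded) *)
Definition closed3 (K : C3 -> Prop) : Prop :=
  forall x, closure3 K x -> K x.
Definition bounded3 (K : C3 -> Prop) : Prop :=
  exists M : R, forall x, K x -> dist3 x (C0, C0, C0) <= M.
Definition compact3 (K : C3 -> Prop) : Prop := closed3 K /\ bounded3 K.

(* Polynomial hull: |f(x)| <= sup_K |f| for every polynomial f, i.e.
   |f(x)| <= M for every upper bound M of |f| on K. *)
Definition poly_hull (K : C3 -> Prop) (x : C3) : Prop :=
  forall (f : poly3) (M : R),
    (forall y, K y -> Cmod (eval_poly3 f y) <= M) ->
    Cmod (eval_poly3 f x) <= M.

(* Let G be the set of (a, s, p) with (s, p) in the closed symmetrised bidisc Gamma and
   |a| (1 - |w|^2) <= |1 - s w + p w^2| for all |w| < 1.  Testing a contraction A on suitable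
   vectors shows pi(A) in G; conversely, for x in G and t < 1 the dilate (t a, t s, t^2 p) is
   pi of an explicit matrix of norm at most sqrt t, so G is the closure of P.  A point outside G
   is separated from P by a polynomial: by p if |p| > 1, by a power sum of the roots l1, l2 of
   z^2 - s z + p if (s, p) lies outside Gamma, and, if the inequality fails at w, by a times a
   truncation of 1 / (1 - s w + p w^2) = sum_n h_n(l1, l2) w^n.  Polynomials bounded on P are
   bounded on its closure, which gives the polynomial convexity of the closure.  For compact
   K in P, a perturbation estimate and compactness yield t < 1 with K dilated by 1 / t inside G;
   separating against dilated polynomials then puts the 1 / t-dilate of every point of the
   hull of K into G, hence the point itself into P. *)

From Stdlib Require Import Reals List Lra Psatz Classical ClassicalEpsilon.
From Coquelicot Require Rcomplements Complex.
From Coquelicot Require Import Compactness.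
Open Scope R_scope.

Ltac Cunfold := unfold Cadd, Csub, Cmul, Cnorm2, Cre, Cim, C0, C1 in *; simpl in *.

Definition Copp (z : C) : C := (- Cre z, - Cim z).

Lemma C_ring : ring_theory C0 C1 Cadd Cmul Csub Copp (@eq C).
Proof.
  constructor; intros; repeat match goal with z : C |- _ => destruct z end;
  unfold Copp; Cunfold; f_equal; ring.
Qed.
Add Ring C_ring : C_ring.

Definition RC (r : R) : C := (r, 0).
Definition Cconj (z : C) : C := (Cre z, - Cim z).

Lemma RC_mul a b : RC (a * b) = Cmul (RC a) (RC b).
Proof. unfold RC; Cunfold; f_equal; ring. Qed.

Lemma RC_opp1 : RC (-1) = Csub C0 C1.
Proof. unfold RC; Cunfold; f_equal; ring. Qed.

Lemma RC_pow a n : RC (a ^ n) = Cpow (RC a) n.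
Proof. induction n as [|n IH]; simpl; [reflexivity|]. now rewrite RC_mul, IH. Qed.

Lemma Cpow_add z i j : Cpow z (i + j) = Cmul (Cpow z i) (Cpow z j).
Proof. induction i as [|i IH]; simpl; [ring|]. rewrite IH; ring. Qed.

Lemma Cpow_mul z w n : Cpow (Cmul z w) n = Cmul (Cpow z n) (Cpow w n).
Proof. induction n as [|n IH]; simpl; [Cunfold; f_equal; ring|]. rewrite IH; ring. Qed.

Lemma Cnorm2_ge0 z : 0 <= Cnorm2 z.
Proof. destruct z; Cunfold; nra. Qed.

Lemma Cnorm2_mul z w : Cnorm2 (Cmul z w) = Cnorm2 z * Cnorm2 w.
Proof. destruct z, w; Cunfold; ring. Qed.

Lemma Cnorm2_RCmul t z : Cnorm2 (Cmul (RC t) z) = t * t * Cnorm2 z.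
Proof. destruct z; unfold RC; Cunfold; ring. Qed.

Lemma Cnorm2_conj z : Cnorm2 (Cconj z) = Cnorm2 z.
Proof. destruct z; unfold Cconj; Cunfold; ring. Qed.

Lemma Cmul_conj_l z : Cmul (Cconj z) z = RC (Cnorm2 z).
Proof. destruct z; unfold Cconj, RC; Cunfold; f_equal; ring. Qed.

Lemma Cnorm2_sub_sym z w : Cnorm2 (Csub z w) = Cnorm2 (Csub w z).
Proof. destruct z, w; Cunfold; ring. Qed.

Lemma Cmod_ge0 z : 0 <= Cmod z.
Proof. apply sqrt_pos. Qed.

Lemma Cmod_sq z : Cmod z * Cmod z = Cnorm2 z.
Proof. apply sqrt_sqrt, Cnorm2_ge0. Qed.

Lemma Cmod_le_Cnorm2 z w : Cnorm2 z <= Cnorm2 w -> Cmod z <= Cmod w.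
Proof. apply sqrt_le_1_alt. Qed.

Lemma Cmod_le1 z : Cnorm2 z <= 1 -> Cmod z <= 1.
Proof. intro H. rewrite <- sqrt_1. now apply sqrt_le_1_alt. Qed.

Lemma Cmod_lt1 z : Cmod z < 1 <-> Cnorm2 z < 1.
Proof.
  rewrite <- Cmod_sq. pose proof (Cmod_ge0 z). split; intro; nra.
Qed.

Lemma Cnorm2_le1 z : Cmod z <= 1 -> Cnorm2 z <= 1.
Proof. rewrite <- Cmod_sq. pose proof (Cmod_ge0 z). nra. Qed.

Lemma Cmod_coquelicot z : Cmod z = Complex.Cmod z.
Proof. unfold Cmod, Complex.Cmod, Cnorm2, Cre, Cim. f_equal; ring. Qed.

Lemma Cmod_mul z w : Cmod (Cmul z w) = Cmod z * Cmod w.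
Proof. rewrite !Cmod_coquelicot. apply Complex.Cmod_mult. Qed.

Lemma Cmod_add z w : Cmod (Cadd z w) <= Cmod z + Cmod w.
Proof. rewrite !Cmod_coquelicot. apply Complex.Cmod_triangle. Qed.

Lemma Cmod_sub_sym z w : Cmod (Csub z w) = Cmod (Csub w z).
Proof. unfold Cmod. now rewrite Cnorm2_sub_sym. Qed.

Lemma Cmod_RC r : Cmod (RC r) = Rabs r.
Proof. unfold Cmod, RC; Cunfold. rewrite <- sqrt_Rsqr_abs. unfold Rsqr. f_equal; ring. Qed.

Lemma Cmod_C1 : Cmod C1 = 1.
Proof. change C1 with (RC 1). rewrite Cmod_RC. apply Rabs_R1. Qed.

Lemma Cmod_scale t z : 0 <= t -> Cmod (Cmul (RC t) z) = t * Cmod z.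
Proof. intro Ht. rewrite Cmod_mul, Cmod_RC, Rabs_right; lra. Qed.

Lemma Cmod_opp z : Cmod (Csub C0 z) = Cmod z.
Proof. unfold Cmod; f_equal; destruct z; Cunfold; ring. Qed.

Lemma Cmod_sub_le z w : Cmod (Csub z w) <= Cmod z + Cmod w.
Proof.
  replace (Csub z w) with (Cadd z (Csub C0 w)) by ring.
  rewrite <- (Cmod_opp w). apply Cmod_add.
Qed.

Lemma Cmod_sub_ge z w : Cmod z - Cmod w <= Cmod (Csub z w).
Proof.
  pose proof (Cmod_add (Csub z w) w) as H.
  replace (Cadd (Csub z w) w) with z in H by ring. lra.
Qed.

Lemma Cmod_add_ge z w : Cmod z - Cmod w <= Cmod (Cadd z w).
Proof.
  pose proof (Cmod_add (Cadd z w) (Csub C0 w)) as H.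
  rewrite Cmod_opp in H. replace (Cadd (Cadd z w) (Csub C0 w)) with z in H by ring. lra.
Qed.

Lemma Cmod_pow z n : Cmod (Cpow z n) = Cmod z ^ n.
Proof.
  induction n as [|n IH]; simpl; [apply Cmod_C1|]. now rewrite Cmod_mul, IH.
Qed.

Lemma Cmod_pow_le1 z n : Cmod z <= 1 -> Cmod (Cpow z n) <= 1.
Proof.
  intro H. rewrite Cmod_pow, <- (pow1 n). apply pow_incr. split; [apply Cmod_ge0|exact H].
Qed.

Definition mon3 : Type := (nat * nat * nat)%type.

Definition mon_add (m1 m2 : mon3) : mon3 :=
  let '(i1, j1, k1) := m1 in let '(i2, j2, k2) := m2 in
  ((i1 + i2)%nat, (j1 + j2)%nat, (k1 + k2)%nat).

Definition eval_mon (m : mon3) (x : C3) : C :=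
  let '(z1, z2, z3) := x in let '(i, j, k) := m in
  Cmul (Cpow z1 i) (Cmul (Cpow z2 j) (Cpow z3 k)).

Lemma eval_mon_add m1 m2 x : eval_mon (mon_add m1 m2) x = Cmul (eval_mon m1 x) (eval_mon m2 x).
Proof.
  destruct x as [[z1 z2] z3], m1 as [[i1 j1] k1], m2 as [[i2 j2] k2]; simpl.
  rewrite !Cpow_add. ring.
Qed.

Lemma eval_poly3_nil x : eval_poly3 nil x = C0.
Proof. now destruct x as [[? ?] ?]. Qed.

Lemma eval_poly3_cons c m f x :
  eval_poly3 ((c, m) :: f) x = Cadd (Cmul c (eval_mon m x)) (eval_poly3 f x).
Proof. now destruct x as [[? ?] ?], m as [[? ?] ?]. Qed.

Definition padd (f g : poly3) : poly3 := f ++ g.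

Definition pscale (c : C) (f : poly3) : poly3 := map (fun t => (Cmul c (fst t), snd t)) f.

Definition pmul (f g : poly3) : poly3 :=
  flat_map (fun t => map (fun u => (Cmul (fst t) (fst u), mon_add (snd t) (snd u))) g) f.

Definition pconst (c : C) : poly3 := (c, (0, 0, 0)%nat) :: nil.
Definition pX1 : poly3 := (C1, (1, 0, 0)%nat) :: nil.
Definition pX2 : poly3 := (C1, (0, 1, 0)%nat) :: nil.
Definition pX3 : poly3 := (C1, (0, 0, 1)%nat) :: nil.

Lemma eval_padd f g x : eval_poly3 (padd f g) x = Cadd (eval_poly3 f x) (eval_poly3 g x).
Proof.
  induction f as [|[c m] f IH]; unfold padd in *; simpl.
  - rewrite eval_poly3_nil. ring.
  - rewrite !eval_poly3_cons, IH. ring.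
Qed.

Lemma eval_pscale c f x : eval_poly3 (pscale c f) x = Cmul c (eval_poly3 f x).
Proof.
  induction f as [|[d m] f IH].
  - destruct x as [[? ?] ?]; cbn. ring.
  - change (pscale c ((d, m) :: f)) with ((Cmul c d, m) :: pscale c f).
    rewrite !eval_poly3_cons, IH. ring.
Qed.

Lemma eval_pmul f g x : eval_poly3 (pmul f g) x = Cmul (eval_poly3 f x) (eval_poly3 g x).
Proof.
  induction f as [|[c m] f IH]; [destruct x as [[? ?] ?]; cbn; ring|].
  change (pmul ((c, m) :: f) g)
    with (padd (map (fun u => (Cmul c (fst u), mon_add m (snd u))) g) (pmul f g)).
  rewrite eval_padd, IH, eval_poly3_cons.
  enough (E : eval_poly3 (map (fun u => (Cmul c (fst u), mon_add m (snd u))) g) x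
              = Cmul (Cmul c (eval_mon m x)) (eval_poly3 g x)) by (rewrite E; ring).
  clear IH. induction g as [|[d m'] g IHg]; [destruct x as [[? ?] ?]; cbn; ring|].
  cbn [map fst snd]. rewrite !eval_poly3_cons, IHg, eval_mon_add. ring.
Qed.

Lemma eval_pconst c x : eval_poly3 (pconst c) x = c.
Proof. destruct x as [[? ?] ?]; cbn. ring. Qed.

Lemma eval_pX1 a s p : eval_poly3 pX1 (a, s, p) = a.
Proof. cbn. ring. Qed.
Lemma eval_pX2 a s p : eval_poly3 pX2 (a, s, p) = s.
Proof. cbn. ring. Qed.
Lemma eval_pX3 a s p : eval_poly3 pX3 (a, s, p) = p.
Proof. cbn. ring. Qed.

Lemma Cmod_eval_scaled_X1 c g a s p : 0 <= c ->
  Cmod (eval_poly3 (pscale (RC c) (pmul pX1 g)) (a, s, p))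
  = c * (Cmod a * Cmod (eval_poly3 g (a, s, p))).
Proof. intro Hc. now rewrite eval_pscale, eval_pmul, eval_pX1, Cmod_scale, Cmod_mul. Qed.

(* Weights (1, 1, 2), so that pi (t A) = dil t (pi A). *)
Definition dil (t : R) (x : C3) : C3 :=
  let '(a, s, p) := x in (Cmul (RC t) a, Cmul (RC t) s, Cmul (RC (t * t)) p).

Lemma dil_dil t u x : dil t (dil u x) = dil (t * u) x.
Proof. destruct x as [[a s] p]. unfold dil. rewrite !RC_mul. f_equal; [f_equal|]; ring. Qed.

Lemma dil_1 x : dil 1 x = x.
Proof. destruct x as [[[? ?] [? ?]] [? ?]]. unfold dil, RC; Cunfold. repeat f_equal; ring. Qed.

Definition poly_dil (t : R) (f : poly3) : poly3 :=
  map (fun u => let '(i, j, k) := snd u in (Cmul (fst u) (RC (t ^ (i + j + 2 * k))), snd u)) f.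

Lemma eval_poly_dil t f x : eval_poly3 (poly_dil t f) x = eval_poly3 f (dil t x).
Proof.
  destruct x as [[a s] p].
  induction f as [|[c [[i j] k]] f IH]; [reflexivity|].
  change (eval_poly3 ((Cmul c (RC (t ^ (i + j + 2 * k))), (i, j, k)) :: poly_dil t f) (a, s, p)
          = eval_poly3 ((c, (i, j, k)) :: f) (dil t (a, s, p))).
  rewrite !eval_poly3_cons, IH. f_equal. simpl.
  rewrite !Cpow_mul, !RC_pow, !Cpow_add, RC_mul, Cpow_mul. simpl Cpow. ring.
Qed.

Definition Ccont_at (F : C3 -> C) (x : C3) : Prop :=
  forall eps, 0 < eps -> exists del, 0 < del /\
    forall y, dist3 x y < del -> Cmod (Csub (F y) (F x)) < eps.

Lemma Ccont_at_ext F G x : (forall y, F y = G y) -> Ccont_at F x -> Ccont_at G x.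
Proof.
  intros E H e He. destruct (H e He) as [d [Hd Hd']]. exists d; split; auto.
  intros y Hy. rewrite <- !E. auto.
Qed.

Lemma Ccont_at_lipschitz F x :
  (forall y, Cmod (Csub (F y) (F x)) <= dist3 x y) -> Ccont_at F x.
Proof. intros H e He. exists e; split; auto. intros y Hy. specialize (H y). lra. Qed.

Lemma Ccont_at_const c x : Ccont_at (fun _ => c) x.
Proof.
  apply Ccont_at_lipschitz. intro y. replace (Csub c c) with C0 by ring. change C0 with (RC 0).
  rewrite Cmod_RC, Rabs_R0. unfold dist3. destruct x as [[? ?] ?], y as [[? ?] ?]. apply sqrt_pos.
Qed.

Lemma dist3_ge_coords a s p a' s' p' :
  Cmod (Csub a' a) <= dist3 (a, s, p) (a', s', p') /\
  Cmod (Csub s' s) <= dist3 (a, s, p) (a', s', p') /\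
  Cmod (Csub p' p) <= dist3 (a, s, p) (a', s', p').
Proof.
  unfold dist3, Cmod. rewrite !(Cnorm2_sub_sym _ a), !(Cnorm2_sub_sym _ s), !(Cnorm2_sub_sym _ p).
  pose proof (Cnorm2_ge0 (Csub a a')). pose proof (Cnorm2_ge0 (Csub s s')).
  pose proof (Cnorm2_ge0 (Csub p p')).
  repeat split; apply sqrt_le_1_alt; lra.
Qed.

Lemma Ccont_at_add F G x :
  Ccont_at F x -> Ccont_at G x -> Ccont_at (fun y => Cadd (F y) (G y)) x.
Proof.
  intros HF HG e He.
  destruct (HF (e/2)) as [d1 [Hd1 H1]]; [lra|].
  destruct (HG (e/2)) as [d2 [Hd2 H2]]; [lra|].
  exists (Rmin d1 d2); split; [apply Rmin_pos; auto|]. intros y Hy.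
  specialize (H1 y (Rlt_le_trans _ _ _ Hy (Rmin_l _ _))).
  specialize (H2 y (Rlt_le_trans _ _ _ Hy (Rmin_r _ _))).
  replace (Csub (Cadd (F y) (G y)) (Cadd (F x) (G x)))
    with (Cadd (Csub (F y) (F x)) (Csub (G y) (G x))) by ring.
  pose proof (Cmod_add (Csub (F y) (F x)) (Csub (G y) (G x))). lra.
Qed.

Lemma Ccont_at_mul F G x :
  Ccont_at F x -> Ccont_at G x -> Ccont_at (fun y => Cmul (F y) (G y)) x.
Proof.
  intros HF HG e He.
  set (K := 1 + Cmod (F x) + Cmod (G x)).
  pose proof (Cmod_ge0 (F x)). pose proof (Cmod_ge0 (G x)).
  set (eta := Rmin 1 (e / (2 * K))).
  assert (Heta : 0 < eta) by (apply Rmin_pos; [lra|]; apply Rdiv_lt_0_compat; unfold K; lra).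
  assert (HetaK : eta * K <= e / 2).
  { pose proof (Rmin_r 1 (e / (2 * K))) as Hm. fold eta in Hm.
    apply (Rmult_le_compat_r K) in Hm; [|unfold K; lra].
    replace (e / (2 * K) * K) with (e / 2) in Hm by (field; unfold K; lra). exact Hm. }
  destruct (HF eta Heta) as [d1 [Hd1 H1]], (HG eta Heta) as [d2 [Hd2 H2]].
  exists (Rmin d1 d2); split; [apply Rmin_pos; auto|]. intros y Hy.
  specialize (H1 y (Rlt_le_trans _ _ _ Hy (Rmin_l _ _))).
  specialize (H2 y (Rlt_le_trans _ _ _ Hy (Rmin_r _ _))).
  replace (Csub (Cmul (F y) (G y)) (Cmul (F x) (G x))) with
    (Cadd (Cmul (Csub (F y) (F x)) (Csub (G y) (G x)))
      (Cadd (Cmul (Csub (F y) (F x)) (G x)) (Cmul (F x) (Csub (G y) (G x))))) by ring.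
  eapply Rle_lt_trans; [apply Cmod_add|].
  eapply Rle_lt_trans; [apply Rplus_le_compat_l, Cmod_add|].
  rewrite !Cmod_mul.
  pose proof (Cmod_ge0 (Csub (F y) (F x))). pose proof (Cmod_ge0 (Csub (G y) (G x))).
  pose proof (Rmin_l 1 (e / (2 * K))) as Heta1. fold eta in Heta1. unfold K in HetaK. nra.
Qed.

Lemma Ccont_at_pow F x n : Ccont_at F x -> Ccont_at (fun y => Cpow (F y) n) x.
Proof.
  intro HF. induction n; simpl; [apply Ccont_at_const|]. now apply Ccont_at_mul.
Qed.

Lemma Ccont_at_eval f x : Ccont_at (eval_poly3 f) x.
Proof.
  destruct x as [[a s] p].
  induction f as [|[c [[i j] k]] f IH].
  - apply (Ccont_at_ext (fun _ => C0)); [intros; now rewrite eval_poly3_nil|].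
    apply Ccont_at_const.
  - apply (Ccont_at_ext (fun y => Cadd (Cmul c (eval_mon (i, j, k) y)) (eval_poly3 f y)));
      [intros; now rewrite eval_poly3_cons|].
    apply Ccont_at_add, IH. apply Ccont_at_mul; [apply Ccont_at_const|].
    apply (Ccont_at_ext (fun y => Cmul (Cpow (fst (fst y)) i)
             (Cmul (Cpow (snd (fst y)) j) (Cpow (snd y) k)))); [now intros [[? ?] ?]|].
    apply Ccont_at_mul; [|apply Ccont_at_mul]; apply Ccont_at_pow, Ccont_at_lipschitz;
      intros [[a' s'] p']; apply (dist3_ge_coords a s p a' s' p').
Qed.

Lemma poly_bound_closure f M (S : C3 -> Prop) x :
  (forall y, S y -> Cmod (eval_poly3 f y) <= M) -> closure3 S x -> Cmod (eval_poly3 f x) <= M.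
Proof.
  intros HS Hx. apply Rnot_lt_le. intro Hlt.
  destruct (Ccont_at_eval f x (Cmod (eval_poly3 f x) - M)) as [d [Hd H]]; [lra|].
  destruct (Hx d Hd) as [y [Sy Hy]].
  specialize (H y Hy). specialize (HS y Sy).
  pose proof (Cmod_sub_ge (eval_poly3 f x) (eval_poly3 f y)).
  rewrite Cmod_sub_sym in H. lra.
Qed.

(** * The set G contains P *)

Definition discr (s p : C) : C := Csub (Cmul (RC (1/4)) (Cmul s s)) p.
Definition Egam (s p : C) : R := 1 + Cnorm2 p - Cnorm2 s / 2.

(* The closed symmetrised bidisc: when s = l1 + l2 and p = l1 l2,
   Egam s p - 2 |discr s p| = (1 - |l1|^2) (1 - |l2|^2), see [Egam_roots]. *)
Definition in_Gamma (s p : C) : Prop := Cmod p <= 1 /\ 2 * Cmod (discr s p) <= Egam s p.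

Definition qfac (w s p : C) : C := Cadd (Csub C1 (Cmul s w)) (Cmul p (Cmul w w)).

(* G, which turns out to be the closure of P. *)
Definition inG (x : C3) : Prop :=
  let '(a, s, p) := x in
  in_Gamma s p /\ forall w, Cnorm2 w < 1 -> Cmod a * (1 - Cnorm2 w) <= Cmod (qfac w s p).

Definition mat_contr (A : mat2) (r : R) : Prop :=
  forall v1 v2 : C,
    Cnorm2 (Cadd (Cmul (a11 A) v1) (Cmul (a12 A) v2))
    + Cnorm2 (Cadd (Cmul (a21 A) v1) (Cmul (a22 A) v2))
    <= (r * r) * (Cnorm2 v1 + Cnorm2 v2).

Definition entries_norm2 (A : mat2) : R :=
  Cnorm2 (a11 A) + Cnorm2 (a12 A) + Cnorm2 (a21 A) + Cnorm2 (a22 A).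

Definition mat_det (A : mat2) : C := Csub (Cmul (a11 A) (a22 A)) (Cmul (a12 A) (a21 A)).

Definition col_inner (A : mat2) : C :=
  Cadd (Cmul (Cconj (a11 A)) (a12 A)) (Cmul (Cconj (a21 A)) (a22 A)).

Ltac mat_destruct A := destruct A as [[? ?] [? ?] [? ?] [? ?]]; simpl.

Lemma det_one_sub_gram A :
  (1 - Cnorm2 (a11 A) - Cnorm2 (a21 A)) * (1 - Cnorm2 (a12 A) - Cnorm2 (a22 A))
  - Cnorm2 (col_inner A) = 1 - entries_norm2 A + Cnorm2 (mat_det A).
Proof. unfold col_inner, entries_norm2, mat_det. mat_destruct A. unfold Cconj; Cunfold. ring. Qed.

Lemma discr_le_entries A :
  2 * Cmod (discr (Cadd (a11 A) (a22 A)) (mat_det A))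
  <= entries_norm2 A - Cnorm2 (Cadd (a11 A) (a22 A)) / 2.
Proof.
  set (d := Csub (a11 A) (a22 A)).
  replace (discr (Cadd (a11 A) (a22 A)) (mat_det A))
    with (Cadd (Cmul (RC (1/4)) (Cmul d d)) (Cmul (a12 A) (a21 A)))
    by (unfold discr, mat_det, d; mat_destruct A; unfold RC; Cunfold; f_equal; field).
  assert (ES : Cnorm2 (a11 A) + Cnorm2 (a22 A)
               = Cnorm2 (Cadd (a11 A) (a22 A)) / 2 + Cnorm2 d / 2).
  { unfold d. mat_destruct A. Cunfold. field. }
  pose proof (Cmod_add (Cmul (RC (1/4)) (Cmul d d)) (Cmul (a12 A) (a21 A))) as H.
  rewrite Cmod_scale, Cmod_mul, Cmod_sq, Cmod_mul in H by lra.
  pose proof (Cmod_sq (a12 A)). pose proof (Cmod_sq (a21 A)).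
  pose proof (Rle_0_sqr (Cmod (a12 A) - Cmod (a21 A))). unfold Rsqr in *.
  unfold entries_norm2. lra.
Qed.

Section Contraction.

Variables (A : mat2) (r : R).
Hypothesis Hr : 0 <= r < 1.
Hypothesis HA : mat_contr A r.

Lemma mat_contr_col1 : Cnorm2 (a11 A) + Cnorm2 (a21 A) <= r * r.
Proof. specialize (HA C1 C0). mat_destruct A. Cunfold. nra. Qed.

Lemma mat_contr_col2 : Cnorm2 (a12 A) + Cnorm2 (a22 A) <= r * r.
Proof. specialize (HA C0 C1). mat_destruct A. Cunfold. nra. Qed.

(* Lagrange's identity |det A|^2 + |<c1, c2>|^2 = |c1|^2 |c2|^2 for the columns. *)
Lemma mat_contr_det : Cnorm2 (mat_det A) <= 1.
Proof.
  pose proof mat_contr_col1. pose proof mat_contr_col2.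
  assert (Hl : Cnorm2 (mat_det A) + Cnorm2 (col_inner A)
              = (Cnorm2 (a11 A) + Cnorm2 (a21 A)) * (Cnorm2 (a12 A) + Cnorm2 (a22 A))).
  { unfold mat_det, col_inner. mat_destruct A. unfold Cconj; Cunfold. ring. }
  pose proof (Cnorm2_ge0 (col_inner A)).
  pose proof (Cnorm2_ge0 (a11 A)). pose proof (Cnorm2_ge0 (a21 A)).
  pose proof (Cnorm2_ge0 (a12 A)). pose proof (Cnorm2_ge0 (a22 A)).
  assert ((Cnorm2 (a11 A) + Cnorm2 (a21 A)) * (Cnorm2 (a12 A) + Cnorm2 (a22 A)) <= 1 * 1)
    by (apply Rmult_le_compat; nra).
  lra.
Qed.

(* Testing the contraction on the vector (<c1, c2>, 1 - |c1|^2) shows det (I - A^* A) >= 0. *)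
Lemma mat_contr_entries : entries_norm2 A <= 1 + Cnorm2 (mat_det A).
Proof.
  pose proof mat_contr_col1 as Hc1. pose proof (det_one_sub_gram A) as Hdet.
  set (m := col_inner A) in *.
  set (h11 := 1 - Cnorm2 (a11 A) - Cnorm2 (a21 A)) in *.
  set (h22 := 1 - Cnorm2 (a12 A) - Cnorm2 (a22 A)) in *.
  pose proof (HA m (RC h11)) as H.
  assert (E : Cnorm2 m + Cnorm2 (RC h11)
              - (Cnorm2 (Cadd (Cmul (a11 A) m) (Cmul (a12 A) (RC h11)))
                 + Cnorm2 (Cadd (Cmul (a21 A) m) (Cmul (a22 A) (RC h11))))
              = h11 * (h11 * h22 - Cnorm2 m)).
  { unfold m, col_inner, h11, h22. mat_destruct A. unfold Cconj, RC; Cunfold. ring. }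
  assert (Hh : 0 < h11) by (unfold h11; nra).
  pose proof (Cnorm2_ge0 m). pose proof (Cnorm2_ge0 (RC h11)).
  assert (0 <= h11 * (h11 * h22 - Cnorm2 m)) by (assert (r * r <= 1) by nra; nra).
  assert (0 <= h11 * h22 - Cnorm2 m) by nra.
  lra.
Qed.

(* With u = (1 - w a22, w a21) and v = A u one has u - w v = (qfac w s p, 0) and
   v - conj(w) u = (_, (1 - |w|^2) a21); comparing |u|^2 - |v|^2 >= 0 gives the bound. *)
Lemma mat_contr_qfac w : Cnorm2 w < 1 ->
  Cmod (a21 A) * (1 - Cnorm2 w)
  <= Cmod (qfac w (Cadd (a11 A) (a22 A)) (mat_det A)).
Proof.
  intro Hw.
  set (u1 := Csub C1 (Cmul w (a22 A))). set (u2 := Cmul w (a21 A)).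
  set (v1 := Cadd (Cmul (a11 A) u1) (Cmul (a12 A) u2)).
  set (v2 := Cadd (Cmul (a21 A) u1) (Cmul (a22 A) u2)).
  pose proof (HA u1 u2) as H. fold v1 v2 in H.
  assert (Ei : Cnorm2 (Csub u1 (Cmul w v1)) + Cnorm2 (Csub u2 (Cmul w v2))
     - (Cnorm2 (Csub v1 (Cmul (Cconj w) u1)) + Cnorm2 (Csub v2 (Cmul (Cconj w) u2)))
     = (1 - Cnorm2 w) * (Cnorm2 u1 + Cnorm2 u2 - Cnorm2 v1 - Cnorm2 v2)).
  { destruct u1, u2, v1, v2, w; unfold Cconj; Cunfold; ring. }
  replace (Csub u1 (Cmul w v1)) with (qfac w (Cadd (a11 A) (a22 A)) (mat_det A)) in Ei
    by (unfold v1, u1, u2, qfac, mat_det; ring).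
  replace (Csub u2 (Cmul w v2)) with C0 in Ei by (unfold v2, u2, u1; ring).
  replace (Csub v2 (Cmul (Cconj w) u2)) with (Cmul (RC (1 - Cnorm2 w)) (a21 A)) in Ei
    by (unfold v2, u1, u2; mat_destruct A; destruct w; unfold Cconj, RC; Cunfold; f_equal; ring).
  rewrite Cnorm2_RCmul in Ei.
  assert (Cnorm2 v1 + Cnorm2 v2 <= Cnorm2 u1 + Cnorm2 u2).
  { pose proof (Cnorm2_ge0 u1). pose proof (Cnorm2_ge0 u2). assert (r * r <= 1) by nra. nra. }
  pose proof (Cnorm2_ge0 (Csub v1 (Cmul (Cconj w) u1))).
  pose proof (Cnorm2_ge0 (a21 A)).
  replace (Cnorm2 C0) with 0 in Ei by (Cunfold; ring).
  rewrite Rmult_comm, <- Cmod_scale by lra. apply Cmod_le_Cnorm2. rewrite Cnorm2_RCmul. nra.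
Qed.

Lemma mat_contr_inG : inG (piA A).
Proof.
  unfold piA, inG. split; [split|].
  - apply Cmod_le1, mat_contr_det.
  - pose proof mat_contr_entries. pose proof (discr_le_entries A). unfold Egam. fold (mat_det A). lra.
  - intros w Hw. apply mat_contr_qfac; auto.
Qed.

End Contraction.

Lemma Pdom_inG y : Pdom y -> inG y.
Proof. intros [A [[r [Hr0 [Hr1 HA]]] <-]]. apply (mat_contr_inG A r); auto. Qed.

(** * G is contained in the closure of P *)

Local Ltac nonneg_sum := repeat apply Rplus_le_le_0_compat;
  [apply pow2_ge_0 | apply pow2_ge_0 | apply Rmult_le_pos; nra].

Lemma hermitian2_nonneg h11 h22 (m v1 v2 : C) :
  0 <= h11 + h22 -> 0 <= h11 * h22 - Cnorm2 m ->
  0 <= h11 * Cnorm2 v1 + h22 * Cnorm2 v2 - 2 * Cre (Cmul (Cmul (Cconj v1) v2) m).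
Proof.
  intros Htr Hdet. destruct m as [m1 m2], v1 as [x1 y1], v2 as [x2 y2].
  unfold Cconj; Cunfold.
  set (Q := h11 * (x1 * x1 + y1 * y1) + h22 * (x2 * x2 + y2 * y2)
            - 2 * ((x1 * x2 - - y1 * y2) * m1 - (x1 * y2 + - y1 * x2) * m2)).
  assert (E1 : h11 * Q = (h11 * x1 - (m1 * x2 - m2 * y2)) ^ 2 + (h11 * y1 - (m1 * y2 + m2 * x2)) ^ 2
                         + (h11 * h22 - (m1 * m1 + m2 * m2)) * (x2 * x2 + y2 * y2))
    by (unfold Q; ring).
  assert (E2 : h22 * Q = (h22 * x2 - (m1 * x1 + m2 * y1)) ^ 2 + (h22 * y2 - (m1 * y1 - m2 * x1)) ^ 2
                         + (h11 * h22 - (m1 * m1 + m2 * m2)) * (x1 * x1 + y1 * y1))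
    by (unfold Q; ring).
  destruct (Rlt_or_le 0 h11) as [H11|H11]; [|destruct (Rlt_or_le 0 h22) as [H22|H22]].
  - assert (0 <= h11 * Q) by (rewrite E1; nonneg_sum). nra.
  - assert (0 <= h22 * Q) by (rewrite E2; nonneg_sum). nra.
  - assert (h11 = 0) by lra. assert (h22 = 0) by lra. subst h11 h22.
    assert (m1 = 0) by nra. assert (m2 = 0) by nra. subst m1 m2. unfold Q. lra.
Qed.

Lemma mat_contr1_of_entries A :
  entries_norm2 A <= 1 + Cnorm2 (mat_det A) -> Cnorm2 (mat_det A) <= 1 -> mat_contr A 1.
Proof.
  intros Hent Hdet v1 v2.
  pose proof (det_one_sub_gram A) as Hgram.
  pose proof (hermitian2_nonneg (1 - Cnorm2 (a11 A) - Cnorm2 (a21 A))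
                (1 - Cnorm2 (a12 A) - Cnorm2 (a22 A)) (col_inner A) v1 v2) as P.
  assert (E : Cnorm2 v1 + Cnorm2 v2 - (Cnorm2 (Cadd (Cmul (a11 A) v1) (Cmul (a12 A) v2))
                + Cnorm2 (Cadd (Cmul (a21 A) v1) (Cmul (a22 A) v2)))
      = (1 - Cnorm2 (a11 A) - Cnorm2 (a21 A)) * Cnorm2 v1
        + (1 - Cnorm2 (a12 A) - Cnorm2 (a22 A)) * Cnorm2 v2
        - 2 * Cre (Cmul (Cmul (Cconj v1) v2) (col_inner A))).
  { unfold col_inner. mat_destruct A. destruct v1, v2; unfold Cconj; Cunfold. ring. }
  unfold entries_norm2 in Hent. specialize (P ltac:(lra) ltac:(unfold entries_norm2 in Hgram; lra)).
  lra.
Qed.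

Definition Csqrt (z : C) : C :=
  (sqrt ((Cmod z + Cre z) / 2),
   (if Rle_dec 0 (Cim z) then 1 else -1) * sqrt ((Cmod z - Cre z) / 2)).

Lemma Csqrt_spec z : Cmul (Csqrt z) (Csqrt z) = z /\ Cnorm2 (Csqrt z) = Cmod z.
Proof.
  assert (Hre : Rabs (Cre z) <= Cmod z).
  { unfold Cmod, Cnorm2. rewrite <- sqrt_Rsqr_abs. apply sqrt_le_1_alt. unfold Rsqr. nra. }
  pose proof (Cmod_sq z) as Hs.
  destruct z as [x y]. unfold Csqrt, Cnorm2 in *; unfold Cre, Cim in *; simpl in *.
  set (r := Cmod (x, y)) in *.
  apply Rcomplements.Rabs_le_between in Hre.
  assert (H1 : 0 <= (r + x) / 2) by lra. assert (H2 : 0 <= (r - x) / 2) by lra.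
  pose proof (sqrt_sqrt _ H1) as S1. pose proof (sqrt_sqrt _ H2) as S2.
  assert (P : sqrt ((r + x) / 2) * sqrt ((r - x) / 2) = Rabs y / 2).
  { rewrite <- sqrt_mult by auto.
    replace ((r + x) / 2 * ((r - x) / 2)) with (Rsqr (Rabs y / 2))
      by (unfold Rsqr; replace (Rabs y / 2 * (Rabs y / 2)) with (Rabs (y * y) / 4)
            by (rewrite Rabs_mult; field); rewrite Rabs_right by nra; nra).
    apply sqrt_Rsqr. pose proof (Rabs_pos y); lra. }
  split.
  - unfold Cmul, Cre, Cim; simpl. destruct (Rle_dec 0 y).
    + rewrite Rabs_right in P by lra. f_equal; nra.
    + rewrite Rabs_left in P by lra. f_equal; nra.
  - destruct (Rle_dec 0 y); nra.
Qed.

Definition build_mat (a s e b : C) (c : R) : mat2 :=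
  let h := Cmul (RC (1/2)) s in Mat2 (Cadd h (Cmul (RC c) e)) b a (Csub h (Cmul (RC c) e)).

Lemma build_mat_spec a s e b c :
  Cmul b a = Cmul (RC (1 - c * c)) (Cmul e e) ->
  mat_det (build_mat a s e b c) = Csub (Cmul (RC (1/4)) (Cmul s s)) (Cmul e e) /\
  piA (build_mat a s e b c) = (a, s, Csub (Cmul (RC (1/4)) (Cmul s s)) (Cmul e e)) /\
  entries_norm2 (build_mat a s e b c)
    = Cnorm2 s / 2 + 2 * (c * c) * Cnorm2 e + Cnorm2 a + Cnorm2 b.
Proof.
  intros Hb.
  assert (Hdet : mat_det (build_mat a s e b c) = Csub (Cmul (RC (1/4)) (Cmul s s)) (Cmul e e)).
  { unfold mat_det, build_mat; simpl. rewrite Hb.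
    destruct s, e; unfold RC; Cunfold; f_equal; field. }
  split; [exact Hdet|split].
  - unfold piA. fold (mat_det (build_mat a s e b c)). rewrite Hdet.
    unfold build_mat; simpl. do 2 f_equal. unfold RC; destruct s; Cunfold; f_equal; field.
  - unfold entries_norm2, build_mat; simpl. destruct s, e; unfold RC; Cunfold. field.
Qed.

Section ClosedBallPoint.

Variables a s p : C.
Hypothesis Hgam : in_Gamma s p.

Let e := Csqrt (discr s p).
Let d := Cmod (discr s p).

Lemma build_point c b :
  Cmul b a = Cmul (RC (1 - c * c)) (Cmul e e) ->
  Cnorm2 s / 2 + 2 * (c * c) * d + Cnorm2 a + Cnorm2 b <= 1 + Cnorm2 p ->
  exists A, mat_contr A 1 /\ piA A = (a, s, p).
Proof.
  intros Hb Hent. destruct (Csqrt_spec (discr s p)) as [He1 He2]. fold e d in He1, He2.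
  assert (Ep : p = Csub (Cmul (RC (1/4)) (Cmul s s)) (Cmul e e)) by (rewrite He1; unfold discr; ring).
  destruct (build_mat_spec a s e b c Hb) as [Hdet [Hpi Hent']].
  exists (build_mat a s e b c). rewrite <- Ep in Hdet, Hpi. split; [|exact Hpi].
  apply mat_contr1_of_entries; rewrite Hdet; [rewrite Hent', He2; exact Hent|].
  apply Cnorm2_le1, Hgam.
Qed.

(* If |a|^2 <= d take c^2 = 1 - |a|^2 / d and b = conj(a) e^2 / d (b = 0 when d = 0);
   otherwise c = 0 and b = conj(a) e^2 / |a|^2. *)
Lemma closed_ball_point :
  Cnorm2 a <= d \/ Cnorm2 a * Cnorm2 a - Egam s p * Cnorm2 a + d * d <= 0 ->
  exists A, mat_contr A 1 /\ piA A = (a, s, p).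
Proof.
  intro Ha. destruct (Csqrt_spec (discr s p)) as [_ He2]. fold e d in He2.
  destruct Hgam as [_ HD]. fold d in HD.
  set (X := Cnorm2 a) in *. assert (HX : 0 <= X) by apply Cnorm2_ge0.
  assert (Hd : 0 <= d) by apply Cmod_ge0.
  assert (Hbform : forall t, Cmul (Cmul (RC t) (Cmul (Cconj a) (Cmul e e))) a
                             = Cmul (RC (t * X)) (Cmul e e)).
  { intro t. rewrite RC_mul. unfold X. rewrite <- Cmul_conj_l. ring. }
  assert (Hbnorm : forall t, Cnorm2 (Cmul (RC t) (Cmul (Cconj a) (Cmul e e))) = t * t * X * (d * d)).
  { intro t. rewrite Cnorm2_RCmul, !Cnorm2_mul, Cnorm2_conj, He2. fold X. ring. }
  destruct (Rle_or_lt X d) as [HXd|HXd].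
  - destruct (Req_dec d 0) as [Hd0|Hd0].
    + assert (HX0 : X = 0) by lra.
      assert (Ha0 : a = C0).
      { unfold X, Cnorm2 in HX0. destruct a as [x y].
        unfold Cre, Cim in HX0; simpl in HX0. assert (x = 0) by nra. assert (y = 0) by nra.
        subst; reflexivity. }
      apply (build_point 1 C0).
      * rewrite Ha0. unfold RC; Cunfold; f_equal; ring.
      * replace (Cnorm2 C0) with 0 by (Cunfold; ring). fold X. unfold Egam in HD. lra.
    + assert (Hc : 0 <= 1 - X / d).
      { enough (X / d <= 1) by lra. apply (Rmult_le_reg_r d); [lra|].
        unfold Rdiv. rewrite Rmult_assoc, Rinv_l by lra. lra. }
      apply (build_point (sqrt (1 - X / d)) (Cmul (RC (1 / d)) (Cmul (Cconj a) (Cmul e e)))).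
      * rewrite Hbform, sqrt_sqrt by lra. do 2 f_equal. field. lra.
      * rewrite Hbnorm, sqrt_sqrt by lra. fold X.
        replace (1 / d * (1 / d) * X * (d * d)) with X by (field; lra).
        replace (2 * (1 - X / d) * d) with (2 * d - 2 * X) by (field; lra).
        unfold Egam in HD. lra.
  - destruct Ha as [|Hq]; [lra|].
    apply (build_point 0 (Cmul (RC (1 / X)) (Cmul (Cconj a) (Cmul e e)))).
    + rewrite Hbform. do 2 f_equal. field. lra.
    + rewrite Hbnorm. fold X. unfold Egam in Hq.
      replace (1 / X * (1 / X) * X * (d * d)) with (d * d / X) by (field; lra).
      assert (d * d / X <= 1 + Cnorm2 p - Cnorm2 s / 2 - X).
      { apply (Rmult_le_reg_r X); [lra|]. replace (d * d / X * X) with (d * d) by (field; lra). nra. }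
      lra.
Qed.

End ClosedBallPoint.

Definition gfac (s p : C) : C := Csub s (Cmul (Cconj s) p).

Definition Nfac (s p : C) (m : R) : C :=
  Cadd (Csub (RC (m * m)) (Cmul (Cmul s (Cconj (gfac s p))) (RC m)))
       (Cmul p (Cmul (Cconj (gfac s p)) (Cconj (gfac s p)))).

Lemma gfac_discr s p :
  (1 - Cnorm2 p) * (1 - Cnorm2 p) - Cnorm2 (gfac s p)
  = Egam s p * Egam s p - 4 * Cnorm2 (discr s p).
Proof. destruct s, p. unfold gfac, Egam, discr, Cconj, RC; Cunfold. field. Qed.

Lemma qfac_Nfac s p m :
  0 < m -> qfac (Cmul (RC (1 / m)) (Cconj (gfac s p))) s p = Cmul (RC (1 / (m * m))) (Nfac s p m).
Proof. intro Hm. destruct s, p. unfold qfac, Nfac, gfac, Cconj, RC; Cunfold. f_equal; field; lra. Qed.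

(* The second factor is the cofactor of the relation K^2 = (1 - |p|^2)^2 - |gfac s p|^2. *)
Lemma Nfac_norm2 s p K :
  K * K = (1 - Cnorm2 p) * (1 - Cnorm2 p) - Cnorm2 (gfac s p) ->
  Cnorm2 (Nfac s p (1 - Cnorm2 p + K))
  = 2 * ((1 - Cnorm2 p + K) * (1 - Cnorm2 p + K)) * (K * K) * (Egam s p + K).
Proof.
  intros HK. destruct s as [s1 s2], p as [p1 p2].
  assert (E : Cnorm2 (Nfac (s1, s2) (p1, p2) (1 - Cnorm2 (p1, p2) + K))
    - 2 * ((1 - Cnorm2 (p1, p2) + K) * (1 - Cnorm2 (p1, p2) + K)) * (K * K)
        * (Egam (s1, s2) (p1, p2) + K)
    = (K * K - ((1 - Cnorm2 (p1, p2)) * (1 - Cnorm2 (p1, p2)) - Cnorm2 (gfac (s1, s2) (p1, p2))))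
      * ((-1)*1 + (-4)*K + (-5)*K*K + (-2)*K*K*K + (2)*p2*p2 + (4)*p2*p2*K + (2)*p2*p2*K*K
         + (-1)*p2*p2*p2*p2 + (2)*p1*p1 + (4)*p1*p1*K + (2)*p1*p1*K*K + (-2)*p1*p1*p2*p2
         + (-1)*p1*p1*p1*p1 + (1)*s2*s2 + (2)*s2*s2*K + (1)*s2*s2*K*K + (1)*s2*s2*p2*p2
         + (2)*s2*s2*p1 + (2)*s2*s2*p1*K + (1)*s2*s2*p1*p1 + (-4)*s1*s2*p2 + (-4)*s1*s2*p2*K
         + (1)*s1*s1 + (2)*s1*s1*K + (1)*s1*s1*K*K + (1)*s1*s1*p2*p2 + (-2)*s1*s1*p1
         + (-2)*s1*s1*p1*K + (1)*s1*s1*p1*p1)).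
  { unfold Nfac, gfac, Egam, Cconj, RC; Cunfold. field. }
  rewrite <- HK, Rminus_diag, Rmult_0_l in E. lra.
Qed.

(* Use the psi-condition at w = conj (gfac s p) / (1 - |p|^2 + K). *)
Lemma psi_at_extremal a s p K :
  Cnorm2 p < 1 -> 0 < K ->
  K * K = (1 - Cnorm2 p) * (1 - Cnorm2 p) - Cnorm2 (gfac s p) ->
  (forall w, Cnorm2 w < 1 -> Cmod a * (1 - Cnorm2 w) <= Cmod (qfac w s p)) ->
  2 * Cnorm2 a <= Egam s p + K.
Proof.
  intros Hp HK0 HK Hpsi.
  set (m := 1 - Cnorm2 p + K). assert (Hm : 0 < m) by (unfold m; lra).
  set (w := Cmul (RC (1 / m)) (Cconj (gfac s p))).
  assert (Hw : Cnorm2 w = (1 - Cnorm2 p - K) / m).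
  { unfold w. rewrite Cnorm2_RCmul, Cnorm2_conj.
    replace (Cnorm2 (gfac s p)) with ((1 - Cnorm2 p - K) * m) by (unfold m; nra). field. lra. }
  assert (Hw1 : Cnorm2 w < 1).
  { rewrite Hw. apply (Rmult_lt_reg_r m); auto. unfold Rdiv.
    rewrite Rmult_assoc, Rinv_l by lra. unfold m; lra. }
  specialize (Hpsi w Hw1). unfold w in Hpsi. rewrite qfac_Nfac, Cmod_scale in Hpsi by
    (auto; apply Rlt_le, Rdiv_lt_0_compat; nra). fold w in Hpsi.
  replace (1 - Cnorm2 w) with (2 * K / m) in Hpsi by (rewrite Hw; unfold m; field; lra).
  pose proof (Nfac_norm2 s p K HK) as HN. fold m in HN.
  pose proof (Cmod_ge0 a). pose proof (Cmod_ge0 (Nfac s p m)).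
  assert (Hsq : (Cmod a * (2 * K / m)) * (Cmod a * (2 * K / m))
                <= (1 / (m * m) * Cmod (Nfac s p m)) * (1 / (m * m) * Cmod (Nfac s p m))).
  { assert (0 <= Cmod a * (2 * K / m)) by (apply Rmult_le_pos; [lra|]; apply Rlt_le, Rdiv_lt_0_compat; lra).
    apply Rmult_le_compat; lra. }
  replace ((Cmod a * (2 * K / m)) * (Cmod a * (2 * K / m)))
    with ((2 * (Cmod a * Cmod a)) * (2 * (K * K) / (m * m))) in Hsq by (field; lra).
  replace ((1 / (m * m) * Cmod (Nfac s p m)) * (1 / (m * m) * Cmod (Nfac s p m)))
    with (Cnorm2 (Nfac s p m) / (m * m * (m * m))) in Hsq by (rewrite <- Cmod_sq; field; lra).
  rewrite HN, Cmod_sq in Hsq.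
  replace (2 * (m * m) * (K * K) * (Egam s p + K) / (m * m * (m * m)))
    with ((Egam s p + K) * (2 * (K * K) / (m * m))) in Hsq by (field; lra).
  apply Rmult_le_reg_r in Hsq; [lra|]. apply Rdiv_lt_0_compat; nra.
Qed.

(* The roots of X^2 - E X + d^2 are (E -+ K)/2 with K = sqrt (E^2 - 4 d^2) >= E - 2 d. *)
Lemma quadratic_root_bound E0 d K X :
  0 <= d -> 2 * d < E0 -> 0 < K -> K * K = E0 * E0 - 4 * (d * d) ->
  d < X -> 0 < X * X - E0 * X + d * d -> E0 + K < 2 * X.
Proof.
  intros Hd HE HK HKK HX HQ.
  assert (HKd : E0 - 2 * d <= K).
  { apply Rnot_lt_le. intro Hlt.
    assert (K * K < (E0 - 2 * d) * (E0 - 2 * d)) by (apply Rmult_le_0_lt_compat; lra). nra. }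
  assert (Hf : (X - (E0 + K) / 2) * (X - (E0 - K) / 2) = X * X - E0 * X + d * d) by nra.
  assert (0 < X - (E0 - K) / 2) by lra.
  destruct (Rle_or_lt (X - (E0 + K) / 2) 0) as [Hn|Hn]; [|lra].
  assert ((X - (E0 + K) / 2) * (X - (E0 - K) / 2) <= 0) by nra. lra.
Qed.

Lemma inG_interior_quadratic a s p :
  Cmod p < 1 -> 2 * Cmod (discr s p) < Egam s p ->
  (forall w, Cnorm2 w < 1 -> Cmod a * (1 - Cnorm2 w) <= Cmod (qfac w s p)) ->
  Cnorm2 a <= Cmod (discr s p) \/
  Cnorm2 a * Cnorm2 a - Egam s p * Cnorm2 a + Cmod (discr s p) * Cmod (discr s p) <= 0.
Proof.
  intros Hp HD Hpsi.
  set (X := Cnorm2 a) in *. set (d := Cmod (discr s p)) in *. set (E0 := Egam s p) in *.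
  destruct (Rle_or_lt X d) as [|HXd]; [left; auto|].
  destruct (Rle_or_lt (X * X - E0 * X + d * d) 0) as [|HQ]; [right; auto|].
  exfalso.
  assert (Hd0 : 0 <= d) by apply Cmod_ge0.
  pose proof (gfac_discr s p) as HE. fold E0 in HE. rewrite <- (Cmod_sq (discr s p)) in HE. fold d in HE.
  assert (Hc : 0 < E0 * E0 - 4 * (d * d)) by nra.
  set (K := sqrt (E0 * E0 - 4 * (d * d))).
  assert (HK : K * K = E0 * E0 - 4 * (d * d)) by (apply sqrt_sqrt; lra).
  assert (HK0 : 0 < K) by (apply sqrt_lt_R0; auto).
  pose proof (quadratic_root_bound E0 d K X Hd0 HD HK0 HK HXd HQ).
  assert (2 * X <= E0 + K); [|lra].
  apply psi_at_extremal; auto; [apply Cmod_lt1; auto|]. rewrite HK, HE. ring.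
Qed.

Lemma discr_dil t s p :
  discr (Cmul (RC t) s) (Cmul (RC (t * t)) p) = Cmul (RC (t * t)) (discr s p).
Proof. unfold discr. rewrite RC_mul. ring. Qed.

Lemma qfac_dil w t s p : qfac w (Cmul (RC t) s) (Cmul (RC (t * t)) p) = qfac (Cmul (RC t) w) s p.
Proof. unfold qfac. rewrite RC_mul. ring. Qed.

Lemma Egam_dil_gap t s p : in_Gamma s p -> 0 <= t <= 1 ->
  2 * Cmod (discr (Cmul (RC t) s) (Cmul (RC (t * t)) p)) + (1 - t * t) * (1 - t * t * Cnorm2 p)
  <= Egam (Cmul (RC t) s) (Cmul (RC (t * t)) p).
Proof.
  intros [Hp HD] Ht. rewrite discr_dil, Cmod_scale by nra. unfold Egam in *.
  rewrite !Cnorm2_RCmul. pose proof (Cnorm2_le1 p Hp). pose proof (Cnorm2_ge0 p).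
  assert (0 <= t * t <= 1) by nra. nra.
Qed.

Lemma inG_dil a s p t : inG (a, s, p) -> 0 <= t <= 1 -> inG (dil t (a, s, p)).
Proof.
  intros [Hgam Hpsi] Ht. pose proof (Egam_dil_gap t s p Hgam Ht) as Hgap.
  destruct Hgam as [Hp _]. pose proof (Cnorm2_le1 p Hp). pose proof (Cnorm2_ge0 p).
  pose proof (Cmod_ge0 p). assert (0 <= t * t <= 1) by nra.
  split; [split|].
  - rewrite Cmod_scale by nra. nra.
  - assert (0 <= (1 - t * t) * (1 - t * t * Cnorm2 p)) by (apply Rmult_le_pos; nra). lra.
  - intros w Hw. rewrite qfac_dil, Cmod_scale by lra.
    pose proof (Cmod_ge0 a). pose proof (Cnorm2_ge0 w).
    assert (Htw : Cnorm2 (Cmul (RC t) w) < 1) by (rewrite Cnorm2_RCmul; nra).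
    specialize (Hpsi _ Htw). rewrite Cnorm2_RCmul in Hpsi.
    assert (t * (1 - Cnorm2 w) <= 1 - t * t * Cnorm2 w) by nra.
    assert (Cmod a * (t * (1 - Cnorm2 w)) <= Cmod a * (1 - t * t * Cnorm2 w))
      by (apply Rmult_le_compat_l; auto).
    lra.
Qed.

Lemma inG_dil_interior a s p t : inG (a, s, p) -> 0 <= t < 1 ->
  Cmod (Cmul (RC (t * t)) p) < 1 /\
  2 * Cmod (discr (Cmul (RC t) s) (Cmul (RC (t * t)) p)) < Egam (Cmul (RC t) s) (Cmul (RC (t * t)) p).
Proof.
  intros [Hgam _] Ht. pose proof (Egam_dil_gap t s p Hgam ltac:(lra)) as Hgap.
  destruct Hgam as [Hp _]. pose proof (Cnorm2_le1 p Hp). pose proof (Cnorm2_ge0 p).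
  pose proof (Cmod_ge0 p). assert (0 <= t * t < 1) by nra.
  split.
  - rewrite Cmod_scale by nra. nra.
  - assert (0 < (1 - t * t) * (1 - t * t * Cnorm2 p)) by (apply Rmult_lt_0_compat; nra). lra.
Qed.

Definition mscale (c : R) (A : mat2) : mat2 :=
  Mat2 (Cmul (RC c) (a11 A)) (Cmul (RC c) (a12 A)) (Cmul (RC c) (a21 A)) (Cmul (RC c) (a22 A)).

Lemma piA_mscale c A : piA (mscale c A) = dil c (piA A).
Proof. unfold piA, mscale, dil; simpl. rewrite RC_mul. f_equal; [f_equal|]; ring. Qed.

Lemma mscale_inv c A : c <> 0 -> mscale c (mscale (/ c) A) = A.
Proof. intro Hc. mat_destruct A. unfold mscale, RC; Cunfold. f_equal; f_equal; field; auto. Qed.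

Lemma mat_contr_mscale c A r : 0 <= c -> mat_contr A r -> mat_contr (mscale c A) (c * r).
Proof.
  intros Hc HA v1 v2. specialize (HA v1 v2). unfold mscale; simpl.
  replace (Cadd (Cmul (Cmul (RC c) (a11 A)) v1) (Cmul (Cmul (RC c) (a12 A)) v2))
    with (Cmul (RC c) (Cadd (Cmul (a11 A) v1) (Cmul (a12 A) v2))) by ring.
  replace (Cadd (Cmul (Cmul (RC c) (a21 A)) v1) (Cmul (Cmul (RC c) (a22 A)) v2))
    with (Cmul (RC c) (Cadd (Cmul (a21 A) v1) (Cmul (a22 A) v2))) by ring.
  rewrite !Cnorm2_RCmul. assert (0 <= c * c) by nra. nra.
Qed.

(* dil t x = pi (sqrt t * A) where pi A = dil (sqrt t) x and A is in the closed unit ball. *)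
Lemma inG_dil_Pdom x t : inG x -> 0 <= t < 1 -> Pdom (dil t x).
Proof.
  intros HG Ht. destruct x as [[a s] p].
  set (tau := sqrt t).
  assert (Htau : 0 <= tau < 1).
  { unfold tau. split; [apply sqrt_pos|]. rewrite <- sqrt_1. apply sqrt_lt_1_alt; lra. }
  assert (Htt : tau * tau = t) by (apply sqrt_sqrt; lra).
  destruct (inG_dil_interior a s p tau HG Htau) as [Hp HD].
  pose proof (inG_dil a s p tau HG ltac:(lra)) as [Hgam Hpsi].
  destruct (closed_ball_point _ _ _ Hgam (inG_interior_quadratic _ _ _ Hp HD Hpsi))
    as [A [HA Hpi]].
  exists (mscale tau A). split.
  - exists (tau * 1). repeat split; [nra|nra|]. apply mat_contr_mscale; [lra|exact HA].
  - rewrite piA_mscale, Hpi, <- Htt, <- dil_dil. reflexivity.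
Qed.

Lemma dist3_dil x t : 0 <= t <= 1 -> dist3 x (dil t x) <= (1 - t * t) * dist3 x (C0, C0, C0).
Proof.
  intro Ht. destruct x as [[a s] p]. unfold dil, dist3.
  replace (Csub a (Cmul (RC t) a)) with (Cmul (RC (1 - t)) a) by (unfold RC; destruct a; Cunfold; f_equal; ring).
  replace (Csub s (Cmul (RC t) s)) with (Cmul (RC (1 - t)) s) by (unfold RC; destruct s; Cunfold; f_equal; ring).
  replace (Csub p (Cmul (RC (t * t)) p)) with (Cmul (RC (1 - t * t)) p) by (unfold RC; destruct p; Cunfold; f_equal; ring).
  replace (Csub a C0) with a by ring. replace (Csub s C0) with s by ring. replace (Csub p C0) with p by ring.
  rewrite !Cnorm2_RCmul.
  set (M := Cnorm2 a + Cnorm2 s + Cnorm2 p).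
  replace ((1 - t * t) * sqrt M) with (sqrt ((1 - t * t) * (1 - t * t) * M))
    by (rewrite sqrt_mult_alt, sqrt_square by (try apply Rmult_le_pos; nra); reflexivity).
  apply sqrt_le_1_alt. unfold M.
  pose proof (Cnorm2_ge0 a); pose proof (Cnorm2_ge0 s); pose proof (Cnorm2_ge0 p).
  assert (Hsq : (1 - t) * (1 - t) <= (1 - t * t) * (1 - t * t)) by (apply Rmult_le_compat; nra).
  apply (Rmult_le_compat_r (Cnorm2 a)) in Hsq as Ha; [|lra].
  apply (Rmult_le_compat_r (Cnorm2 s)) in Hsq as Hs; [|lra].
  lra.
Qed.

Lemma inG_Pbar x : inG x -> Pbar x.
Proof.
  intros HG eps Heps.
  set (N := dist3 x (C0, C0, C0)).
  assert (HN : 0 <= N) by (unfold N, dist3; destruct x as [[? ?] ?]; apply sqrt_pos).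
  set (del := Rmin (1/2) (eps / (N + 1))).
  assert (Hdel : 0 < del) by (apply Rmin_pos; [lra|]; apply Rdiv_lt_0_compat; lra).
  assert (HdelN : del * N < eps).
  { apply (Rle_lt_trans _ (eps / (N + 1) * N)); [apply Rmult_le_compat_r; [lra|apply Rmin_r]|].
    apply (Rmult_lt_reg_r (N + 1)); [lra|]. field_simplify; nra. }
  set (t := sqrt (1 - del)).
  assert (Hdel1 : del <= 1/2) by apply Rmin_l.
  assert (Htt : t * t = 1 - del) by (apply sqrt_sqrt; lra).
  assert (Ht0 : 0 <= t) by apply sqrt_pos.
  assert (Ht : 0 <= t < 1) by nra.
  exists (dil t x). split; [apply inG_dil_Pdom; auto|].
  pose proof (dist3_dil x t ltac:(lra)) as Hdist. fold N in Hdist. rewrite Htt in Hdist. lra.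
Qed.

(** * Separating points outside G from P *)

Lemma sym_roots s p : exists l1 l2, s = Cadd l1 l2 /\ p = Cmul l1 l2.
Proof.
  destruct (Csqrt_spec (discr s p)) as [He _]. set (e := Csqrt (discr s p)) in *.
  exists (Cadd (Cmul (RC (1/2)) s) e), (Csub (Cmul (RC (1/2)) s) e). split.
  - destruct s; unfold RC; Cunfold; f_equal; field.
  - replace (Cmul (Cadd (Cmul (RC (1 / 2)) s) e) (Csub (Cmul (RC (1 / 2)) s) e))
      with (Csub (Cmul (Cmul (RC (1/2)) (RC (1/2))) (Cmul s s)) (Cmul e e)) by ring.
    rewrite He, <- RC_mul. unfold discr. replace (1/2 * (1/2)) with (1/4) by field. ring.
Qed.

Lemma Egam_roots l1 l2 :
  Egam (Cadd l1 l2) (Cmul l1 l2) - 2 * Cmod (discr (Cadd l1 l2) (Cmul l1 l2))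
  = (1 - Cmod l1 * Cmod l1) * (1 - Cmod l2 * Cmod l2).
Proof.
  replace (discr (Cadd l1 l2) (Cmul l1 l2)) with (Cmul (RC (1/4)) (Cmul (Csub l1 l2) (Csub l1 l2)))
    by (unfold discr; destruct l1, l2; unfold RC; Cunfold; f_equal; field).
  rewrite Cmod_scale, Cmod_mul, !Cmod_sq by lra.
  unfold Egam. rewrite Cnorm2_mul. destruct l1, l2; Cunfold. field.
Qed.

Lemma unit_factors_le1 u v : 0 <= u -> 0 <= v -> u * v <= 1 ->
  0 <= (1 - u * u) * (1 - v * v) -> u <= 1 /\ v <= 1.
Proof.
  intros Hu Hv Huv H.
  destruct (Rle_or_lt u 1) as [Hu1|Hu1]; destruct (Rle_or_lt v 1) as [Hv1|Hv1]; try lra; exfalso.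
  - assert (1 - v * v < 0) by nra.
    destruct (Rlt_or_le 0 (1 - u * u)); [nra|]. assert (1 <= u) by nra. nra.
  - assert (1 - u * u < 0) by nra.
    destruct (Rlt_or_le 0 (1 - v * v)); [nra|]. assert (1 <= v) by nra. nra.
  - nra.
Qed.

Lemma unit_factors_split u v : 0 <= u -> 0 <= v -> u * v <= 1 ->
  (1 - u * u) * (1 - v * v) < 0 -> (1 < u /\ v < 1) \/ (1 < v /\ u < 1).
Proof.
  intros Hu Hv Huv H.
  destruct (Rlt_or_le 1 u) as [Hu1|Hu1].
  - left. split; auto. apply Rnot_le_lt. intro. nra.
  - right. destruct (Rlt_or_le 1 v) as [Hv1|Hv1]; [split; auto; apply Rnot_le_lt; intro; nra|].
    exfalso. assert (0 <= 1 - u * u) by nra. assert (0 <= 1 - v * v) by nra. nra.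
Qed.

Lemma in_Gamma_roots l1 l2 :
  in_Gamma (Cadd l1 l2) (Cmul l1 l2) -> Cmod l1 <= 1 /\ Cmod l2 <= 1.
Proof.
  intros [Hp HD]. pose proof (Egam_roots l1 l2). rewrite Cmod_mul in Hp.
  apply unit_factors_le1; auto using Cmod_ge0. lra.
Qed.

Lemma not_in_Gamma_roots l1 l2 :
  Cmod (Cmul l1 l2) <= 1 ->
  Egam (Cadd l1 l2) (Cmul l1 l2) < 2 * Cmod (discr (Cadd l1 l2) (Cmul l1 l2)) ->
  (1 < Cmod l1 /\ Cmod l2 < 1) \/ (1 < Cmod l2 /\ Cmod l1 < 1).
Proof.
  intros Hp HD. pose proof (Egam_roots l1 l2). rewrite Cmod_mul in Hp.
  apply unit_factors_split; auto using Cmod_ge0. lra.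
Qed.

Lemma inG_roots a s p : inG (a, s, p) ->
  exists l1 l2, s = Cadd l1 l2 /\ p = Cmul l1 l2 /\ Cmod l1 <= 1 /\ Cmod l2 <= 1.
Proof.
  intros [Hgam _]. destruct (sym_roots s p) as [l1 [l2 [-> ->]]].
  exists l1, l2. pose proof (in_Gamma_roots l1 l2 Hgam). tauto.
Qed.

Lemma nat_ind2 (P : nat -> Prop) :
  P 0%nat -> P 1%nat -> (forall n, P n -> P (S n) -> P (S (S n))) -> forall n, P n.
Proof.
  intros H0 H1 HS n. enough (P n /\ P (S n)) by tauto.
  induction n as [|n [IH1 IH2]]; auto.
Qed.

Fixpoint rec_poly (u0 u1 : poly3) (n : nat) : poly3 :=
  match n with
  | O => u0
  | S O => u1
  | S ((S m) as k) => padd (pmul pX2 (rec_poly u0 u1 k)) (pscale (RC (-1)) (pmul pX3 (rec_poly u0 u1 m)))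
  end.

Lemma eval_rec_poly u0 u1 n a s p :
  eval_poly3 (rec_poly u0 u1 (S (S n))) (a, s, p)
  = Csub (Cmul s (eval_poly3 (rec_poly u0 u1 (S n)) (a, s, p)))
         (Cmul p (eval_poly3 (rec_poly u0 u1 n) (a, s, p))).
Proof.
  change (rec_poly u0 u1 (S (S n)))
    with (padd (pmul pX2 (rec_poly u0 u1 (S n))) (pscale (RC (-1)) (pmul pX3 (rec_poly u0 u1 n)))).
  rewrite eval_padd, eval_pscale, !eval_pmul, eval_pX2, eval_pX3, RC_opp1. ring.
Qed.

Definition power_sum (n : nat) : poly3 := rec_poly (pconst (RC 2)) pX2 n.

Lemma eval_power_sum n a l1 l2 :
  eval_poly3 (power_sum n) (a, Cadd l1 l2, Cmul l1 l2) = Cadd (Cpow l1 n) (Cpow l2 n).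
Proof.
  induction n as [| |n IH0 IH1] using nat_ind2; unfold power_sum in *.
  - cbn. unfold RC; Cunfold; f_equal; ring.
  - cbn [rec_poly]. rewrite eval_pX2. simpl Cpow. ring.
  - rewrite eval_rec_poly, IH0, IH1. simpl Cpow. ring.
Qed.

(* The complete homogeneous symmetric polynomials h_n (l1, l2) = sum_(i + j = n) l1^i l2^j. *)
Definition hom_sym (n : nat) : poly3 := rec_poly (pconst C1) pX2 n.

Fixpoint hom_sym_val (l1 l2 : C) (n : nat) : C :=
  match n with
  | O => C1
  | S m => Cadd (Cpow l1 (S m)) (Cmul l2 (hom_sym_val l1 l2 m))
  end.

Lemma eval_hom_sym n a l1 l2 :
  eval_poly3 (hom_sym n) (a, Cadd l1 l2, Cmul l1 l2) = hom_sym_val l1 l2 n.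
Proof.
  induction n as [| |n IH0 IH1] using nat_ind2; unfold hom_sym in *.
  - apply eval_pconst.
  - cbn [rec_poly]. rewrite eval_pX2. simpl. ring.
  - rewrite eval_rec_poly, IH0, IH1. simpl. ring.
Qed.

Lemma hom_sym_val_bound l1 l2 n :
  Cmod l1 <= 1 -> Cmod l2 <= 1 -> Cmod (hom_sym_val l1 l2 n) <= INR n + 1.
Proof.
  intros H1 H2. induction n as [|n IH]; [simpl; rewrite Cmod_C1; lra|].
  change (hom_sym_val l1 l2 (S n)) with (Cadd (Cpow l1 (S n)) (Cmul l2 (hom_sym_val l1 l2 n))).
  eapply Rle_trans; [apply Cmod_add|]. rewrite Cmod_mul, S_INR.
  pose proof (Cmod_pow_le1 l1 (S n) H1). pose proof (Cmod_ge0 l2).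
  pose proof (Cmod_ge0 (hom_sym_val l1 l2 n)).
  assert (Cmod l2 * Cmod (hom_sym_val l1 l2 n) <= 1 * (INR n + 1)) by (apply Rmult_le_compat; auto).
  lra.
Qed.

Definition separates (f : poly3) (x : C3) : Prop :=
  (forall y, Pdom y -> Cmod (eval_poly3 f y) <= 1) /\ 1 < Cmod (eval_poly3 f x).

Lemma separates_det_gt1 a s p : 1 < Cmod p -> separates pX3 (a, s, p).
Proof.
  intro H. split; [|now rewrite eval_pX3].
  intros [[a' s'] p'] Hy. destruct (Pdom_inG _ Hy) as [[Hp _] _]. now rewrite eval_pX3.
Qed.

Lemma separates_roots a L M : 1 < Cmod L -> Cmod M < 1 ->
  exists f, separates f (a, Cadd L M, Cmul L M).
Proof.
  intros HL HM.
  destruct (INR_archimed (Cmod L - 1) 2) as [n Hn]; [lra|].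
  exists (pscale (RC (1/2)) (power_sum n)). split.
  - intros [[a' s'] p'] Hy. destruct (inG_roots _ _ _ (Pdom_inG _ Hy)) as [m1 [m2 [-> [-> [H1 H2]]]]].
    rewrite eval_pscale, eval_power_sum, Cmod_scale by lra.
    pose proof (Cmod_add (Cpow m1 n) (Cpow m2 n)).
    pose proof (Cmod_pow_le1 m1 n H1). pose proof (Cmod_pow_le1 m2 n H2). lra.
  - rewrite eval_pscale, eval_power_sum, Cmod_scale by lra.
    pose proof (Cmod_add_ge (Cpow L n) (Cpow M n)) as Ha.
    pose proof (Cmod_pow_le1 M n ltac:(lra)) as Hb.
    pose proof (poly n (Cmod L - 1) ltac:(lra)) as Hc.
    replace (1 + (Cmod L - 1)) with (Cmod L) in Hc by ring. rewrite Cmod_pow in Ha. lra.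
Qed.

Lemma separates_not_Gamma a s p : Cmod p <= 1 -> Egam s p < 2 * Cmod (discr s p) ->
  exists f, separates f (a, s, p).
Proof.
  intros Hp HD. destruct (sym_roots s p) as [l1 [l2 [-> ->]]].
  destruct (not_in_Gamma_roots l1 l2 Hp HD) as [[H1 H2]|[H1 H2]].
  - apply separates_roots; auto.
  - replace (Cadd l1 l2) with (Cadd l2 l1) by ring. replace (Cmul l1 l2) with (Cmul l2 l1) by ring.
    apply separates_roots; auto.
Qed.

(* Truncation of 1 / qfac w s p = sum_n h_n w^n at order N, as a polynomial in (a, s, p). *)
Fixpoint trunc_inv (w : C) (N : nat) : poly3 :=
  match N with
  | O => hom_sym 0
  | S M => padd (trunc_inv w M) (pscale (Cpow w (S M)) (hom_sym (S M)))
  end.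

Lemma qfac_trunc_inv w N a s p :
  Cmul (qfac w s p) (eval_poly3 (trunc_inv w N) (a, s, p)) =
  Csub C1 (Cmul (Cpow w (S N)) (Csub (eval_poly3 (hom_sym (S N)) (a, s, p))
                                     (Cmul p (Cmul w (eval_poly3 (hom_sym N) (a, s, p)))))).
Proof.
  induction N as [|N IH].
  - cbn [trunc_inv hom_sym rec_poly]. rewrite eval_pconst, eval_pX2. unfold qfac. simpl Cpow. ring.
  - cbn [trunc_inv]. rewrite eval_padd, eval_pscale. unfold hom_sym at 2. rewrite eval_rec_poly.
    fold (hom_sym (S N)) (hom_sym N).
    replace (Cmul (qfac w s p) (Cadd (eval_poly3 (trunc_inv w N) (a, s, p))
               (Cmul (Cpow w (S N)) (eval_poly3 (hom_sym (S N)) (a, s, p)))))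
      with (Cadd (Cmul (qfac w s p) (eval_poly3 (trunc_inv w N) (a, s, p)))
             (Cmul (qfac w s p) (Cmul (Cpow w (S N)) (eval_poly3 (hom_sym (S N)) (a, s, p)))))
      by ring.
    rewrite IH. change (Cpow w (S (S N))) with (Cmul w (Cpow w (S N))). unfold qfac. ring.
Qed.

Lemma qfac_trunc_inv_near1 w N a l1 l2 : Cmod l1 <= 1 -> Cmod l2 <= 1 -> Cmod w < 1 ->
  let eps := Cmod w ^ (S N) * (2 * INR N + 3) in
  let y := (a, Cadd l1 l2, Cmul l1 l2) in
  1 - eps <= Cmod (qfac w (Cadd l1 l2) (Cmul l1 l2)) * Cmod (eval_poly3 (trunc_inv w N) y) <= 1 + eps.
Proof.
  intros H1 H2 Hw eps y. pose proof (Cmod_ge0 w) as Hw0.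
  rewrite <- Cmod_mul. unfold y. rewrite qfac_trunc_inv, !eval_hom_sym.
  set (rho := Csub (hom_sym_val l1 l2 (S N))
                   (Cmul (Cmul l1 l2) (Cmul w (hom_sym_val l1 l2 N)))).
  assert (Hrho : Cmod rho <= 2 * INR N + 3).
  { unfold rho. eapply Rle_trans; [apply Cmod_sub_le|]. rewrite !Cmod_mul.
    pose proof (hom_sym_val_bound l1 l2 (S N) H1 H2) as HS. rewrite S_INR in HS.
    pose proof (hom_sym_val_bound l1 l2 N H1 H2) as HN.
    pose proof (Cmod_ge0 l1). pose proof (Cmod_ge0 l2). pose proof (Cmod_ge0 (hom_sym_val l1 l2 N)).
    assert (Cmod l1 * Cmod l2 <= 1) by (rewrite <- (Rmult_1_l 1); apply Rmult_le_compat; auto).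
    assert (Cmod l1 * Cmod l2 * (Cmod w * Cmod (hom_sym_val l1 l2 N)) <= 1 * (1 * (INR N + 1)))
      by (apply Rmult_le_compat; try apply Rmult_le_pos; auto; apply Rmult_le_compat; lra).
    lra. }
  assert (Hwr : Cmod (Cmul (Cpow w (S N)) rho) <= eps).
  { rewrite Cmod_mul, Cmod_pow. apply Rmult_le_compat_l; auto. apply pow_le; auto. }
  pose proof (Cmod_sub_le C1 (Cmul (Cpow w (S N)) rho)).
  pose proof (Cmod_sub_ge C1 (Cmul (Cpow w (S N)) rho)). rewrite Cmod_C1 in *. lra.
Qed.

Lemma qfac_roots_ge w l1 l2 r : 0 <= r <= 1 -> Cmod l1 <= r -> Cmod l2 <= r -> Cmod w <= 1 ->
  (1 - r * Cmod w) * (1 - r * Cmod w) <= Cmod (qfac w (Cadd l1 l2) (Cmul l1 l2)).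
Proof.
  intros Hr H1 H2 Hw.
  replace (qfac w (Cadd l1 l2) (Cmul l1 l2)) with (Cmul (Csub C1 (Cmul l1 w)) (Csub C1 (Cmul l2 w)))
    by (unfold qfac; ring).
  rewrite Cmod_mul. pose proof (Cmod_ge0 w).
  assert (Hf : forall l, Cmod l <= r -> 1 - r * Cmod w <= Cmod (Csub C1 (Cmul l w))).
  { intros l Hl. pose proof (Cmod_sub_ge C1 (Cmul l w)) as Hge. rewrite Cmod_C1, Cmod_mul in Hge.
    assert (Cmod l * Cmod w <= r * Cmod w) by (apply Rmult_le_compat_r; lra). lra. }
  assert (0 <= 1 - r * Cmod w) by nra. apply Rmult_le_compat; auto.
Qed.

Lemma qfac_dil_ge w s p sg : in_Gamma s p -> 0 <= sg <= 1 -> Cmod w <= 1 ->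
  (1 - sg) * (1 - sg) <= Cmod (qfac w (Cmul (RC sg) s) (Cmul (RC (sg * sg)) p)).
Proof.
  intros Hgam Hsg Hw. destruct (sym_roots s p) as [m1 [m2 [-> ->]]].
  destruct (in_Gamma_roots m1 m2 Hgam) as [Hm1 Hm2].
  replace (Cmul (RC sg) (Cadd m1 m2)) with (Cadd (Cmul (RC sg) m1) (Cmul (RC sg) m2)) by ring.
  replace (Cmul (RC (sg * sg)) (Cmul m1 m2)) with (Cmul (Cmul (RC sg) m1) (Cmul (RC sg) m2))
    by (rewrite RC_mul; ring).
  pose proof (Cmod_ge0 m1). pose proof (Cmod_ge0 m2). pose proof (Cmod_ge0 w).
  eapply Rle_trans; [|apply (qfac_roots_ge w _ _ sg); rewrite ?Cmod_scale by lra; nra].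
  assert (sg * Cmod w <= sg) by nra. apply Rmult_le_compat; lra.
Qed.

Lemma pow_binomial2_lower h n :
  0 <= h -> 1 + INR n * h + INR n * (INR n - 1) / 2 * (h * h) <= (1 + h) ^ n.
Proof.
  intro Hh. induction n as [|n IH]; [simpl; lra|].
  rewrite S_INR. simpl pow. pose proof (pos_INR n).
  assert (Hn : 0 <= INR n * (INR n - 1)).
  { destruct n; [simpl; lra|]. rewrite S_INR. pose proof (pos_INR n). nra. }
  assert (0 <= INR n * (INR n - 1) / 2 * (h * h) * h).
  { apply Rmult_le_pos; [|lra]. apply Rmult_le_pos; [|nra]. lra. }
  assert ((1 + h) * (1 + INR n * h + INR n * (INR n - 1) / 2 * (h * h)) <= (1 + h) * (1 + h) ^ n)
    by (apply Rmult_le_compat_l; lra).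
  nra.
Qed.

(* Writing r = 1 / (1 + h), r^(n+2) <= 2 / ((n+2)(n+1) h^2). *)
Lemma pow_linear_small r th : 0 <= r < 1 -> 0 < th ->
  exists N, r ^ (S N) * (2 * INR N + 3) < th.
Proof.
  intros Hr Hth. destruct (Req_dec r 0) as [->|Hr0]; [exists 0%nat; simpl; lra|].
  set (h := 1 / r - 1).
  assert (Hh : 0 < h).
  { unfold h. enough (1 < 1 / r) by lra. apply (Rmult_lt_reg_r r); [lra|].
    unfold Rdiv. rewrite Rmult_assoc, Rinv_l by lra. lra. }
  assert (Hrh : r * (1 + h) = 1) by (unfold h; field; lra).
  destruct (INR_archimed (th * (h * h)) 6) as [n Hn]; [apply Rmult_lt_0_compat; nra|].
  exists (S n). set (M := S (S n)). pose proof (pos_INR n).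
  pose proof (pow_binomial2_lower h M (Rlt_le _ _ Hh)) as HB.
  replace (INR M) with (INR n + 2) in HB by (unfold M; rewrite !S_INR; ring).
  assert (Hpos : 0 < (1 + h) ^ M) by (apply pow_lt; lra).
  assert (HrM : r ^ M = / (1 + h) ^ M).
  { apply (Rmult_eq_reg_r ((1 + h) ^ M)); [|lra].
    rewrite <- Rpow_mult_distr, Hrh, pow1, Rinv_l; lra. }
  change (r ^ S (S n)) with (r ^ M). rewrite HrM, S_INR.
  set (L := (INR n + 2) * (INR n + 1) / 2 * (h * h)).
  assert (Hlow : L <= (1 + h) ^ M).
  { unfold L. replace (INR n + 2 - 1) with (INR n + 1) in HB by ring.
    assert (0 <= (INR n + 2) * h) by nra. lra. }
  assert (HL : 0 < L) by (apply Rmult_lt_0_compat; unfold Rdiv; nra).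
  apply (Rle_lt_trans _ (/ L * (2 * (INR n + 1) + 3))).
  - apply Rmult_le_compat_r; [lra|]. apply Rinv_le_contravar; auto.
  - apply (Rmult_lt_reg_l L); auto. rewrite <- Rmult_assoc, Rinv_r by lra. unfold L. nra.
Qed.

(* f = (1 - |w|^2) / (1 + eps) a T_N(w): on P, |f| <= |qfac T_N| / (1 + eps) <= 1 by the
   psi-condition, while at x, |f| >= kap (1 - eps) / (1 + eps) > 1 with
   kap = |a| (1 - |w|^2) / |qfac w s p| > 1. *)
Lemma separates_psi a s p w : in_Gamma s p -> Cnorm2 w < 1 ->
  Cmod (qfac w s p) < Cmod a * (1 - Cnorm2 w) -> exists f, separates f (a, s, p).
Proof.
  intros HG Hw Hbad.
  assert (Hw1 : Cmod w < 1) by (apply Cmod_lt1; auto). pose proof (Cmod_ge0 w) as Hw0.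
  set (W := 1 - Cnorm2 w) in *. assert (HW : 0 < W) by (unfold W; lra).
  destruct (sym_roots s p) as [l1 [l2 [-> ->]]].
  destruct (in_Gamma_roots l1 l2 HG) as [Hl1 Hl2].
  set (q := qfac w (Cadd l1 l2) (Cmul l1 l2)) in *.
  assert (Hq0 : 0 < Cmod q).
  { pose proof (qfac_roots_ge w l1 l2 1 ltac:(lra) Hl1 Hl2 ltac:(lra)) as Hq. fold q in Hq. nra. }
  set (kap := Cmod a * W / Cmod q).
  assert (Hka : Cmod a * W = kap * Cmod q) by (unfold kap; field; lra).
  assert (Hk : 1 < kap) by (apply (Rmult_lt_reg_r (Cmod q)); lra).
  destruct (pow_linear_small (Cmod w) ((kap - 1) / (kap + 1)) (conj Hw0 Hw1)) as [N HN];
    [apply Rdiv_lt_0_compat; lra|].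
  set (eps := Cmod w ^ S N * (2 * INR N + 3)) in *.
  assert (He0 : 0 <= eps) by (apply Rmult_le_pos; [apply pow_le|pose proof (pos_INR N)]; lra).
  assert (Heps : eps * (kap + 1) < kap - 1).
  { apply (Rmult_lt_compat_r (kap + 1)) in HN; [|lra].
    replace ((kap - 1) / (kap + 1) * (kap + 1)) with (kap - 1) in HN by (field; lra). lra. }
  exists (pscale (RC (W / (1 + eps))) (pmul pX1 (trunc_inv w N))).
  assert (Hc : 0 <= W / (1 + eps)) by (apply Rlt_le, Rdiv_lt_0_compat; lra).
  split.
  - intros [[a' s'] p'] Hy. pose proof (Pdom_inG _ Hy) as [_ Hpsi]. specialize (Hpsi w Hw).
    destruct (inG_roots _ _ _ (Pdom_inG _ Hy)) as [m1 [m2 [-> [-> [H1 H2]]]]].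
    destruct (qfac_trunc_inv_near1 w N a' m1 m2 H1 H2 Hw1) as [_ Hup]. fold eps in Hup.
    rewrite Cmod_eval_scaled_X1 by exact Hc.
    set (T := Cmod (eval_poly3 (trunc_inv w N) (a', Cadd m1 m2, Cmul m1 m2))) in *.
    assert (Cmod a' * W * T <= Cmod (qfac w (Cadd m1 m2) (Cmul m1 m2)) * T)
      by (apply Rmult_le_compat_r; [apply Cmod_ge0|exact Hpsi]).
    apply (Rmult_le_reg_r (1 + eps)); [lra|].
    replace (W / (1 + eps) * (Cmod a' * T) * (1 + eps)) with (Cmod a' * W * T) by (field; lra). lra.
  - destruct (qfac_trunc_inv_near1 w N a l1 l2 Hl1 Hl2 Hw1) as [Hlow _]. fold eps q in Hlow.
    rewrite Cmod_eval_scaled_X1 by exact Hc.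
    set (T := Cmod (eval_poly3 (trunc_inv w N) (a, Cadd l1 l2, Cmul l1 l2))) in *.
    assert (kap * (1 - eps) <= kap * (Cmod q * T)) by (apply Rmult_le_compat_l; lra).
    apply (Rmult_lt_reg_r (1 + eps)); [lra|].
    replace (W / (1 + eps) * (Cmod a * T) * (1 + eps)) with (kap * (Cmod q * T))
      by (rewrite <- Rmult_assoc, <- Hka; field; lra). lra.
Qed.

Lemma not_inG_separates x : ~ inG x -> exists f, separates f x.
Proof.
  destruct x as [[a s] p]. intro HnG.
  destruct (Rlt_or_le 1 (Cmod p)) as [Hp|Hp]; [exists pX3; now apply separates_det_gt1|].
  destruct (Rlt_or_le (Egam s p) (2 * Cmod (discr s p))) as [HD|HD];
    [now apply separates_not_Gamma|].
  assert (HG : in_Gamma s p) by (split; auto).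
  destruct (classic (exists w, Cnorm2 w < 1 /\ Cmod (qfac w s p) < Cmod a * (1 - Cnorm2 w)))
    as [[w [Hw Hbad]]|Hno]; [now apply (separates_psi a s p w)|].
  exfalso. apply HnG. split; auto. intros w Hw. apply Rnot_lt_le. intro. apply Hno. now exists w.
Qed.

(** * Points of P have G-neighbourhoods *)

Lemma Cmod_le_near z z' : Cmod z' <= Cmod z + Cmod (Csub z' z).
Proof. replace z' with (Cadd z (Csub z' z)) at 1 by ring. apply Cmod_add. Qed.

Lemma Cmod_ge_near z z' : Cmod z - Cmod (Csub z' z) <= Cmod z'.
Proof. rewrite Cmod_sub_sym. pose proof (Cmod_le_near z' z). lra. Qed.

Lemma Cnorm2_near z z' :
  Cnorm2 z - (Cmod z' + Cmod z) * Cmod (Csub z' z) <= Cnorm2 z'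
  <= Cnorm2 z + (Cmod z' + Cmod z) * Cmod (Csub z' z).
Proof.
  pose proof (Cmod_le_near z z'). pose proof (Cmod_ge_near z z').
  rewrite <- (Cmod_sq z), <- (Cmod_sq z').
  pose proof (Cmod_ge0 z). pose proof (Cmod_ge0 z'). pose proof (Cmod_ge0 (Csub z' z)). nra.
Qed.

(* Dilating a point of G by sg < 1 leaves slack of order (1 - sg)^2 in each defining
   inequality, which absorbs perturbations of size (1 - sg)^3 / 10. *)
Section Perturbation.

Variables (a s p a' s' p' : C) (sg : R).
Hypothesis HG : inG (a, s, p).
Hypothesis Hsg : 0 <= sg < 1.

Let eta := (1 - sg) ^ 3 / 10.
Hypothesis Ha : Cmod (Csub a' (Cmul (RC sg) a)) < eta.
Hypothesis Hs : Cmod (Csub s' (Cmul (RC sg) s)) < eta.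
Hypothesis Hp : Cmod (Csub p' (Cmul (RC (sg * sg)) p)) < eta.

Lemma eta_bounds :
  0 < eta /\ 10 * eta <= (1 - sg) * (1 - sg) /\ (1 - sg) * (1 - sg) <= 1 - sg /\
  10 * eta = (1 - sg) * ((1 - sg) * (1 - sg)).
Proof.
  unfold eta. simpl. assert (0 < 1 - sg <= 1) by lra.
  assert (0 < (1 - sg) * (1 - sg)) by nra. repeat split; nra.
Qed.

Lemma perturb_det : Cmod p' <= 1.
Proof.
  destruct HG as [[HpG _] _]. pose proof eta_bounds as [He [He1 [He2 _]]].
  pose proof (Cmod_le_near (Cmul (RC (sg * sg)) p) p') as Hnear.
  rewrite Cmod_scale in Hnear by nra.
  pose proof (Cmod_ge0 p). assert (sg * sg * Cmod p <= sg * sg) by nra. nra.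
Qed.

Lemma perturb_Gamma : 2 * Cmod (discr s' p') <= Egam s' p'.
Proof.
  pose proof eta_bounds as [He [He1 [He2 He3]]]. pose proof HG as [Hgam _].
  pose proof (Egam_dil_gap sg s p Hgam ltac:(lra)) as Hgap.
  destruct Hgam as [HpG HDG].
  set (s0 := Cmul (RC sg) s) in *. set (p0 := Cmul (RC (sg * sg)) p) in *.
  assert (Hgap0 : (1 - sg) * (1 - sg) <= Egam s0 p0 - 2 * Cmod (discr s0 p0)).
  { pose proof (Cnorm2_le1 p HpG). pose proof (Cnorm2_ge0 p).
    assert (sg * sg * Cnorm2 p <= sg * sg * 1) by (apply Rmult_le_compat_l; nra).
    assert (sg * sg <= sg) by nra.
    assert ((1 - sg) * (1 - sg) <= (1 - sg * sg) * (1 - sg * sg * Cnorm2 p))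
      by (apply Rmult_le_compat; lra). lra. }
  assert (Hs0 : Cmod s0 <= 2).
  { unfold s0. rewrite Cmod_scale by lra. unfold Egam in HDG.
    pose proof (Cmod_ge0 (discr s p)). pose proof (Cnorm2_le1 p HpG).
    pose proof (Cmod_sq s). pose proof (Cmod_ge0 s).
    assert (Cmod s <= 2) by nra. nra. }
  assert (Hp0 : Cmod p0 <= 1) by (unfold p0; rewrite Cmod_scale by nra; pose proof (Cmod_ge0 p); nra).
  pose proof (Cmod_le_near s0 s'). pose proof (Cmod_le_near p0 p').
  pose proof (Cmod_ge0 (Csub s' s0)). pose proof (Cmod_ge0 (Csub p' p0)).
  pose proof (Cmod_ge0 s'). pose proof (Cmod_ge0 p').
  pose proof (Cmod_ge0 s0). pose proof (Cmod_ge0 p0).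
  pose proof (Cnorm2_near p0 p') as Hnp. pose proof (Cnorm2_near s0 s') as Hns.
  assert (Hnp' : (Cmod p' + Cmod p0) * Cmod (Csub p' p0) <= 3 * eta)
    by (apply Rmult_le_compat; lra).
  assert (Hns' : (Cmod s' + Cmod s0) * Cmod (Csub s' s0) <= 5 * eta)
    by (apply Rmult_le_compat; lra).
  assert (HdD : Cmod (Csub (discr s' p') (discr s0 p0)) <= 9 / 4 * eta).
  { replace (Csub (discr s' p') (discr s0 p0)) with
      (Csub (Cmul (RC (1/4)) (Cmul (Csub s' s0) (Cadd s' s0))) (Csub p' p0))
      by (unfold discr; ring).
    eapply Rle_trans; [apply Cmod_sub_le|]. rewrite Cmod_scale, Cmod_mul by lra.
    pose proof (Cmod_add s' s0).
    assert (Cmod (Csub s' s0) * Cmod (Cadd s' s0) <= eta * 5)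
      by (apply Rmult_le_compat; try apply Cmod_ge0; lra).
    lra. }
  pose proof (Cmod_le_near (discr s0 p0) (discr s' p')).
  unfold Egam in *. lra.
Qed.

Lemma perturb_psi w : Cnorm2 w < 1 -> Cmod a' * (1 - Cnorm2 w) <= Cmod (qfac w s' p').
Proof.
  intro Hw. pose proof eta_bounds as [He [He1 [He2 He3]]].
  assert (Hw1 : Cmod w < 1) by (apply Cmod_lt1; auto).
  pose proof (Cmod_ge0 w) as Hw0. pose proof (Cnorm2_ge0 w).
  destruct HG as [Hgam Hpsi].
  assert (Hsw : Cnorm2 (Cmul (RC sg) w) < 1) by (rewrite Cnorm2_RCmul; nra).
  specialize (Hpsi _ Hsw). rewrite Cnorm2_RCmul, <- qfac_dil in Hpsi.
  set (s0 := Cmul (RC sg) s) in *. set (p0 := Cmul (RC (sg * sg)) p) in *.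
  set (Q := Cmod (qfac w s0 p0)) in *.
  assert (HQ : (1 - sg) * (1 - sg) <= Q) by (apply qfac_dil_ge; [exact Hgam|lra|lra]).
  assert (Hq' : Q - 2 * eta <= Cmod (qfac w s' p')).
  { pose proof (Cmod_ge_near (qfac w s0 p0) (qfac w s' p')) as Hnear. fold Q in Hnear.
    enough (Cmod (Csub (qfac w s' p') (qfac w s0 p0)) <= 2 * eta) by lra.
    replace (Csub (qfac w s' p') (qfac w s0 p0))
      with (Csub (Cmul (Csub p' p0) (Cmul w w)) (Cmul (Csub s' s0) w)) by (unfold qfac; ring).
    eapply Rle_trans; [apply Cmod_sub_le|]. rewrite !Cmod_mul.
    pose proof (Cmod_ge0 (Csub s' s0)). pose proof (Cmod_ge0 (Csub p' p0)).
    assert (Cmod (Csub s' s0) * Cmod w <= eta * 1) by (apply Rmult_le_compat; lra).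
    assert (Cmod (Csub p' p0) * (Cmod w * Cmod w) <= eta * 1)
      by (apply Rmult_le_compat; try lra; nra).
    lra. }
  assert (Ha0 : Cmod (Cmul (RC sg) a) * (1 - Cnorm2 w) <= sg * Q).
  { rewrite Cmod_scale by lra. pose proof (Cmod_ge0 a).
    assert (Cmod a * (1 - Cnorm2 w) <= Cmod a * (1 - sg * sg * Cnorm2 w))
      by (apply Rmult_le_compat_l; nra).
    nra. }
  pose proof (Cmod_le_near (Cmul (RC sg) a) a'). pose proof (Cmod_ge0 a').
  assert (Cmod a' * (1 - Cnorm2 w) <= (Cmod (Cmul (RC sg) a) + eta) * (1 - Cnorm2 w))
    by (apply Rmult_le_compat_r; lra).
  assert (3 * eta <= (1 - sg) * Q).
  { assert ((1 - sg) * ((1 - sg) * (1 - sg)) <= (1 - sg) * Q) by (apply Rmult_le_compat_l; lra).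
    nra. }
  nra.
Qed.

Lemma inG_perturb : inG (a', s', p').
Proof. split; [split|]; [apply perturb_det|apply perturb_Gamma|apply perturb_psi]. Qed.

End Perturbation.

(* y = dil rho (pi (A / rho)) with rho = (1 + ||A||) / 2, and A / rho is still in the open ball;
   a neighbourhood of y is mapped by dil (1 / sqrt rho) close to dil (sqrt rho) (pi (A / rho)). *)
Lemma Pdom_locally_dil_inG y : Pdom y -> exists del, 0 < del /\ exists t, 0 < t < 1 /\
  forall y', dist3 y y' < del -> inG (dil (/ t) y').
Proof.
  intros [A [[r [Hr0 [Hr1 HA]]] Hy]].
  set (rho := (1 + r) / 2). assert (Hrho : 0 < rho < 1) by (unfold rho; lra).
  assert (Hrr : 0 <= / rho * r < 1).
  { split; [apply Rmult_le_pos; [apply Rlt_le, Rinv_0_lt_compat|]; lra|].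
    apply (Rmult_lt_reg_l rho); [lra|]. rewrite <- Rmult_assoc, Rinv_r by lra. unfold rho; lra. }
  pose proof (mat_contr_inG _ _ Hrr (mat_contr_mscale (/ rho) A r
                (Rlt_le _ _ (Rinv_0_lt_compat _ (proj1 Hrho))) HA)) as HG.
  assert (Hyg : y = dil rho (piA (mscale (/ rho) A)))
    by (rewrite <- piA_mscale, mscale_inv by lra; auto).
  destruct (piA (mscale (/ rho) A)) as [[ag sg0] pg].
  set (sg := sqrt rho). assert (Hsg2 : sg * sg = rho) by (apply sqrt_sqrt; lra).
  assert (Hsg : 0 < sg < 1).
  { split; [apply sqrt_lt_R0; lra|]. assert (0 <= sg) by apply sqrt_pos. nra. }
  set (eta := (1 - sg) ^ 3 / 10).
  assert (Heta : 0 < eta) by (unfold eta; assert (0 < (1 - sg) ^ 3) by (apply pow_lt; lra); lra).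
  exists (eta * (sg * sg)). split; [nra|]. exists sg. split; auto.
  intros [[a' s'] p'] Hd. rewrite Hyg in Hd. unfold dil in Hd |- *.
  destruct (dist3_ge_coords (Cmul (RC rho) ag) (Cmul (RC rho) sg0) (Cmul (RC (rho * rho)) pg) a' s' p')
    as [Da [Ds Dp]].
  assert (Hsq : sg * sg <= sg) by nra.
  assert (Hinv : 0 <= / sg) by (apply Rlt_le, Rinv_0_lt_compat; lra).
  apply (inG_perturb ag sg0 pg _ _ _ sg HG ltac:(lra)).
  - replace (Csub (Cmul (RC (/ sg)) a') (Cmul (RC sg) ag)) with (Cmul (RC (/ sg)) (Csub a' (Cmul (RC rho) ag)))
      by (rewrite <- Hsg2; destruct a', ag; unfold RC; Cunfold; f_equal; field; lra).
    rewrite Cmod_scale by lra. fold eta.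
    apply (Rmult_lt_reg_l sg); [lra|]. rewrite <- Rmult_assoc, Rinv_r by lra. nra.
  - replace (Csub (Cmul (RC (/ sg)) s') (Cmul (RC sg) sg0)) with (Cmul (RC (/ sg)) (Csub s' (Cmul (RC rho) sg0)))
      by (rewrite <- Hsg2; destruct s', sg0; unfold RC; Cunfold; f_equal; field; lra).
    rewrite Cmod_scale by lra. fold eta.
    apply (Rmult_lt_reg_l sg); [lra|]. rewrite <- Rmult_assoc, Rinv_r by lra. nra.
  - replace (Csub (Cmul (RC (/ sg * / sg)) p') (Cmul (RC (sg * sg)) pg))
      with (Cmul (RC (/ sg * / sg)) (Csub p' (Cmul (RC (rho * rho)) pg)))
      by (rewrite <- Hsg2; destruct p', pg; unfold RC; Cunfold; f_equal; field; lra).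
    rewrite Cmod_scale by (apply Rmult_le_pos; lra). fold eta.
    apply (Rmult_lt_reg_l (sg * sg)); [nra|]. rewrite <- Rmult_assoc.
    replace (sg * sg * (/ sg * / sg)) with 1 by (field; lra). lra.
Qed.

(** * Compactness *)

Definition to_R6 (x : C3) : Tn 6 R :=
  let '((x1, x2), (x3, x4), (x5, x6)) := x in (x1, (x2, (x3, (x4, (x5, (x6, tt)))))).

Definition of_R6 (z : Tn 6 R) : C3 :=
  let '(x1, (x2, (x3, (x4, (x5, (x6, _)))))) := z in ((x1, x2), (x3, x4), (x5, x6)).

Lemma of_to_R6 x : of_R6 (to_R6 x) = x.
Proof. now destruct x as [[[? ?] [? ?]] [? ?]]. Qed.

Lemma bounded_to_R6 M x : dist3 x (C0, C0, C0) <= M ->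
  bounded_n 6 (to_R6 ((-M, -M), (-M, -M), (-M, -M))) (to_R6 ((M, M), (M, M), (M, M))) (to_R6 x).
Proof.
  destruct x as [[[x1 x2] [x3 x4]] [x5 x6]]. unfold dist3; Cunfold. intro H.
  assert (Hc : forall u, u * u <= (x1 - 0) * (x1 - 0) + (x2 - 0) * (x2 - 0)
      + ((x3 - 0) * (x3 - 0) + (x4 - 0) * (x4 - 0)) + ((x5 - 0) * (x5 - 0) + (x6 - 0) * (x6 - 0))
      -> -M <= u <= M).
  { intros u Hu. apply Rcomplements.Rabs_le_between. eapply Rle_trans; [|exact H].
    rewrite <- sqrt_Rsqr_abs. now apply sqrt_le_1_alt. }
  repeat split; apply Hc; nra.
Qed.

Lemma dist3_close_n d z c : close_n 6 d z c -> dist3 (of_R6 c) (of_R6 z) < 3 * d.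
Proof.
  destruct z as [z1 [z2 [z3 [z4 [z5 [z6 []]]]]]], c as [c1 [c2 [c3 [c4 [c5 [c6 []]]]]]].
  simpl. intros (H1 & H2 & H3 & H4 & H5 & H6 & _).
  assert (Hd : 0 < d) by (pose proof (Rabs_pos (z1 - c1)); lra).
  assert (Hsq : forall u v, Rabs (u - v) < d -> (v - u) * (v - u) < d * d).
  { intros u v Huv. rewrite Rabs_minus_sym in Huv.
    pose proof (Rabs_pos (v - u)). pose proof (Rsqr_abs (v - u)). unfold Rsqr in *. nra. }
  apply Hsq in H1, H2, H3, H4, H5, H6.
  unfold dist3; Cunfold. rewrite <- (sqrt_square (3 * d)) by lra.
  assert (0 < d * d) by nra. apply sqrt_lt_1_alt. split; [|lra].
  repeat apply Rplus_le_le_0_compat; apply Rle_0_sqr.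
Qed.

Section UniformOnCompact.

Variables (K : C3 -> Prop) (P : R -> C3 -> Prop).
Hypothesis P_mono : forall t t' y, P t y -> t <= t' -> t' < 1 -> P t' y.

Definition locally_P (y : C3) (d : R) : Prop :=
  exists t, 0 < t < 1 /\ forall y', dist3 y y' < d -> P t y'.

Lemma locally_P_finite (l : list (Tn 6 R)) (d : Tn 6 R -> R) :
  (forall c, In c l -> K (of_R6 c) -> locally_P (of_R6 c) (d c)) ->
  exists t, 0 < t < 1 /\
    forall c, In c l -> K (of_R6 c) -> forall y', dist3 (of_R6 c) y' < d c -> P t y'.
Proof.
  induction l as [|c l IH]; intro Hl; [exists (1/2); split; [lra|intros ? []]|].
  destruct IH as [t1 [Ht1 H1]]; [intros; apply Hl; simpl; auto|].
  destruct (classic (K (of_R6 c))) as [Kc|nKc].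
  - destruct (Hl c (or_introl eq_refl) Kc) as [t2 [Ht2 H2]].
    exists (Rmax t1 t2). split; [split; [apply (Rlt_le_trans _ t1); [lra|apply Rmax_l]|apply Rmax_lub_lt; lra]|].
    intros c' [<-|Hc'] Kc' y' Hy'.
    + apply (P_mono t2); [eauto|apply Rmax_r|apply Rmax_lub_lt; lra].
    + apply (P_mono t1); [eauto|apply Rmax_l|apply Rmax_lub_lt; lra].
  - exists t1. split; [exact Ht1|]. intros c' [<-|Hc']; [contradiction|eauto].
Qed.

Lemma not_closed_gap y : closed3 K -> ~ K y -> exists e, 0 < e /\ forall y', K y' -> e <= dist3 y y'.
Proof.
  intros Hcl Hy. apply NNPP. intro Hno. apply Hy, Hcl. intros e He.
  apply NNPP. intro Hfar. apply Hno. exists e. split; auto.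
  intros y' Ky'. apply Rnot_lt_le. intro. apply Hfar. now exists y'.
Qed.

(* A Cousin-type gauge: around points of K, a radius on which P holds for some t < 1;
   elsewhere, a radius missing K. *)
Lemma gauge_exists : closed3 K -> (forall y, K y -> exists del, 0 < del /\ locally_P y del) ->
  forall z, exists d : posreal,
    (K (of_R6 z) -> locally_P (of_R6 z) (3 * d)) /\
    (~ K (of_R6 z) -> forall y', K y' -> 3 * d <= dist3 (of_R6 z) y').
Proof.
  intros Hcl Hloc z. destruct (classic (K (of_R6 z))) as [Kz|nKz].
  - destruct (Hloc _ Kz) as [del [Hdel Hl]].
    exists (mkposreal (del / 3) ltac:(lra)). simpl. split; [|contradiction].
    now replace (3 * (del / 3)) with del by field.
  - destruct (not_closed_gap _ Hcl nKz) as [e [He Hgap]].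
    exists (mkposreal (e / 3) ltac:(lra)). simpl. split; [contradiction|].
    now replace (3 * (e / 3)) with e by field.
Qed.

Lemma compact3_uniform :
  compact3 K -> (forall y, K y -> exists del, 0 < del /\ locally_P y del) ->
  exists t, 0 < t < 1 /\ forall y, K y -> P t y.
Proof.
  intros [Hcl [M HM]] Hloc.
  pose (delta z := proj1_sig (constructive_indefinite_description _ (gauge_exists Hcl Hloc z))).
  assert (Hdelta : forall z, (K (of_R6 z) -> locally_P (of_R6 z) (3 * delta z)) /\
                   (~ K (of_R6 z) -> forall y', K y' -> 3 * delta z <= dist3 (of_R6 z) y'))
    by (intro z; exact (proj2_sig (constructive_indefinite_description _ (gauge_exists Hcl Hloc z)))).
  destruct (NNPP _ (compactness_list 6 (to_R6 ((-M, -M), (-M, -M), (-M, -M)))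
                      (to_R6 ((M, M), (M, M), (M, M))) delta)) as [l Hl].
  destruct (locally_P_finite l (fun c => 3 * delta c)) as [t [Ht Hunif]];
    [intros c _ Kc; now apply Hdelta|].
  exists t. split; auto. intros y Ky.
  destruct (Hl (to_R6 y) (bounded_to_R6 M y (HM y Ky))) as [c [Hc [_ Hclose]]].
  pose proof (dist3_close_n _ _ _ Hclose) as Hdist. rewrite of_to_R6 in Hdist.
  destruct (classic (K (of_R6 c))) as [Kc|nKc]; [now apply (Hunif c)|].
  pose proof (proj2 (Hdelta c) nKc y Ky). lra.
Qed.

End UniformOnCompact.

(** * Polynomial convexity *)

Lemma not_inG_separates_Pbar x : ~ inG x ->
  exists f, (forall y, Pbar y -> Cmod (eval_poly3 f y) <= 1) /\ 1 < Cmod (eval_poly3 f x).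
Proof.
  intro HnG. destruct (not_inG_separates x HnG) as [f [Hf Hfx]].
  exists f. split; auto. intros y Hy. exact (poly_bound_closure f 1 Pdom y Hf Hy).
Qed.

Lemma Pdom_compact_dil_inG K : compact3 K -> (forall y, K y -> Pdom y) ->
  exists t, 0 < t < 1 /\ forall y, K y -> inG (dil (/ t) y).
Proof.
  intros Hc HKP.
  destruct (compact3_uniform K (fun t y => 0 < t /\ inG (dil (/ t) y))) as [t [Ht HKt]]; auto.
  - intros t t' [[a s] p] [Ht0 HG] Htt Ht'. split; [lra|].
    replace (dil (/ t') (a, s, p)) with (dil (t * / t') (dil (/ t) (a, s, p)))
      by (rewrite dil_dil; f_equal; field; lra).
    destruct (dil (/ t) (a, s, p)) as [[a0 s0] p0]. apply inG_dil; auto.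
    split; [apply Rmult_le_pos; [lra|apply Rlt_le, Rinv_0_lt_compat; lra]|].
    apply (Rmult_le_reg_r t'); [lra|]. rewrite Rmult_assoc, Rinv_l by lra. lra.
  - intros y Ky. destruct (Pdom_locally_dil_inG y (HKP y Ky)) as [del [Hdel [t [Ht Hy]]]].
    exists del. split; auto. exists t. split; auto. intros y' Hy'. split; [lra|auto].
  - exists t. split; auto. intros y Ky. apply HKt, Ky.
Qed.

Lemma poly_hull_dil_inG K x u :
  (forall y, K y -> inG (dil u y)) -> poly_hull K x -> inG (dil u x).
Proof.
  intros HK Hx. apply NNPP. intro HnG.
  destruct (not_inG_separates_Pbar _ HnG) as [f [Hf Hfx]].
  assert (Hb : Cmod (eval_poly3 (poly_dil u f) x) <= 1)
    by (apply Hx; intros y Ky; rewrite eval_poly_dil; apply Hf, inG_Pbar, HK, Ky).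
  rewrite eval_poly_dil in Hb. lra.
Qed.

Theorem theorem6p3 :
  (forall x : C3, ~ Pbar x ->
     exists f : poly3,
       (forall y : C3, Pbar y -> Cmod (eval_poly3 f y) <= 1) /\
       1 < Cmod (eval_poly3 f x)) /\
  (forall K : C3 -> Prop,
     compact3 K -> (forall y, K y -> Pdom y) ->
     forall x : C3, poly_hull K x -> Pdom x).
Proof.
  split.
  - intros x Hx. apply not_inG_separates_Pbar. intro HG. apply Hx, inG_Pbar, HG.
  - intros K HK HKP x Hx.
    destruct (Pdom_compact_dil_inG K HK HKP) as [t [Ht HKt]].
    replace x with (dil t (dil (/ t) x))
      by (rewrite dil_dil, Rinv_r, dil_1 by lra; reflexivity).
    apply inG_dil_Pdom; [apply (poly_hull_dil_inG K); auto|lra].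
Qed.
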